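(* Let $n=2$ and let $h:[0,1]\to[0,1]$ be a $C^\infty$ function which is not identically zero on $[0,\tfrac12]$ and not identically zero on $[\tfrac12,1]$. Then there exist functions $F_1(r),F_2(r)$ (depending on $h$) with the following property: if $\{p_r\}$ is any sequence of integers with $0\le p_r\le r-2$ and $\lim_{r\to\infty}(2p_r-r)/\sqrt r=a$ for some $a\in\mathbb{R}$, then for almost every $x\in\Omega$, \[ \lim_{r\to\infty}F_1(r)\cdot k_{p_r,1}\big(\mathrm{B}^h_r(x)\big)=e^{-a^2/2}\quad\text{and}\quad \lim_{r\to\infty}F_2(r)\cdot k_{p_r,2}\big(\mathrm{B}^h_r(x)\big)=e^{-a^2/2}. \]
   Context: Here $n=2$. For an integer $r\ge 2$ and $i\in[r]=\{1,\dots,r\}$, write $[r]\setminus\{i\}=\{d_0<d_1<\dots<d_{r-2}\}$; the pure diagram $\pi(r,i)$ is the array of real numbers $k_{p,q}(\pi(r,i))$, $p=0,\dots,r-2$, $q=1,2$, with $k_{p,q}(\pi(r,i))=0$ if $q\ne d_p-p$ and $k_{p,d_p-p}(\pi(r,i))=(r-2)!\prod_{0\le\ell\le r-2,\ \ell\neq p}\frac{1}{|d_\ell-d_p|}$. Let $\Omega=[0,1]^{\mathbb{Z}_{>0}}$ with the product of uniform (Lebesgue) probability measures; for $x=(x_i)_{i\ge 1}\in\Omega$ the weighted Betti table $\mathrm{B}^h_r(x)$ has entries \[ k_{p,q}\big(\mathrm{B}^h_r(x)\big)=\sum_{i=1}^r h\!\left(\tfrac{i}{r}\right)x_i\,k_{p,q}(\pi(r,i)).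 \] *)

From Stdlib Require Import Reals List Arith.
Import ListNotations.
Open Scope R_scope.

Definition lsum (l : list R) : R := fold_right Rplus 0 l.
Definition lprod (l : list R) : R := fold_right Rmult 1 l.

(* [r] \ {i} = {d_0 < ... < d_{r-2}}  (i in 1..r) : d_p *)
Definition dseq (i p : nat) : nat := if Nat.ltb (S p) i then S p else S (S p).

Definition pure_entry (r i p q : nat) : R :=
  if Nat.eqb (dseq i p - p)%nat q then
    INR (fact (r - 2)) *
    lprod (map (fun l => / Rabs (INR (dseq i l) - INR (dseq i p)))
               (filter (fun l => negb (Nat.eqb l p)) (seq 0 (r - 1))))
  else 0.

Definition betti_entry (h : R -> R) (r : nat) (x : nat -> R) (p q : nat) : R :=
  lsum (map (fun i => h (INR i / INR r) * x i * pure_entry r i p q) (seq 1 r)).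

Definition smooth (h : R -> R) : Prop :=
  exists f : nat -> R -> R,
    (forall t, f 0%nat t = h t) /\
    (forall k t, derivable_pt_lim (f k) t (f (S k) t)).

(* Omega = [0,1]^{Z>0}; points are x : nat -> R, coordinate 0 is unused. *)
Definition in_Omega (x : nat -> R) : Prop :=
  forall i, (1 <= i)%nat -> 0 <= x i <= 1.

Record box := { bn : nat; ba : nat -> R; bb : nat -> R }.
Definition box_ok (B : box) : Prop :=
  forall i, (1 <= i <= bn B)%nat -> 0 <= ba B i /\ ba B i <= bb B i /\ bb B i <= 1.
Definition in_box (B : box) (x : nat -> R) : Prop :=
  forall i, (1 <= i <= bn B)%nat -> ba B i <= x i <= bb B i.
Definition box_vol (B : box) : R :=
  lprod (map (fun i => bb B i - ba B i) (seq 1 (bn B))).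

(* Null sets of the product Lebesgue measure on Omega: outer measure zero
   (countable covers by cylinder boxes of arbitrarily small total volume). *)
Definition Omega_null (N : (nat -> R) -> Prop) : Prop :=
  forall eps, 0 < eps ->
    exists C : nat -> box,
      (forall k, box_ok (C k)) /\
      (forall x, in_Omega x -> N x -> exists k, in_box (C k) x) /\
      (forall m, lsum (map (fun k => box_vol (C k)) (seq 0 m)) <= eps).

Definition ae_Omega (P : (nat -> R) -> Prop) : Prop :=
  Omega_null (fun x => ~ P x).

From Stdlib Require Import Reals Lra Lia List ZArith FinFun Classical.
From Stdlib Require Cantor.
Import ListNotations.
Open Scope R_scope.

(* Only rows [q = 1, 2] of the pure diagram [pi(r,i)] are
      nonzero; evaluating the product defining its entries gives
      [C(r-2,p) (i-p-1) / (r-1-p)] on row 1 (when [i > p+1]) and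
      [C(r-2,p) (p+2-i) / (p+1)] on row 2 (when [i <= p+1]).  So each row of
      [B^h_r(x)] is a binomial coefficient times a linear form
      [sum_i h(i/r) w_i x_i] with explicit weights [w].
   2. Deterministic asymptotics.  The normalisers [F_q] are the reciprocals of
      the entries at the central degree [mid r = floor(r/2)] with [x] replaced by
      its mean.  Then [F_q(r) k_{p_r,q}] is the product of
      [C(r-2,p_r) / C(r-2,mid r)], which tends to [exp(-a^2/2)] by a
      quantitative Gaussian approximation of binomial log-ratios; a ratio of
      linear prefactors and a ratio of total weights, both tending to 1 (the
      total weights are of order [r^2] since [h] vanishes on neither half of
      [[0,1]]); and a random factor [1 + Z_r(x)].
   3. A strong law of large numbers.  [Z_r(x) = sum_i c_{r,i} (x_i - 1/2)] with
      [c_{r,i} = O(1/r)].  A fourth-moment (Chebyshev) bound on the cells of a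
      fine grid covers [{|Z_r| > 2 r^(-1/8)}] by boxes of volume [O(r^(-3/2))];
      these volumes are summable, so [Z_r -> 0] outside a null set of [Omega]. *)

Lemma lsum_app l1 l2 : lsum (l1 ++ l2) = lsum l1 + lsum l2.
Proof. induction l1; simpl; [lra | rewrite IHl1; lra]. Qed.

Lemma lprod_app l1 l2 : lprod (l1 ++ l2) = lprod l1 * lprod l2.
Proof. induction l1; simpl; [lra | rewrite IHl1; lra]. Qed.

Lemma lsum_ext {A} (f g : A -> R) l :
  (forall x, In x l -> f x = g x) -> lsum (map f l) = lsum (map g l).
Proof. induction l; simpl; intros H; auto. rewrite H, IHl; auto. Qed.

Lemma lprod_ext {A} (f g : A -> R) l :
  (forall x, In x l -> f x = g x) -> lprod (map f l) = lprod (map g l).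
Proof. induction l; simpl; intros H; auto. rewrite H, IHl; auto. Qed.

Lemma lsum_le {A} (f g : A -> R) l :
  (forall x, In x l -> f x <= g x) -> lsum (map f l) <= lsum (map g l).
Proof.
  induction l; simpl; intros H; [lra |].
  pose proof (H a (or_introl eq_refl)). pose proof (IHl (fun x h => H x (or_intror h))). lra.
Qed.

Lemma lsum_scal {A} c (f : A -> R) l : lsum (map (fun x => c * f x) l) = c * lsum (map f l).
Proof. induction l; simpl; [ring | rewrite IHl; ring]. Qed.

Lemma lsum_plus {A} (f g : A -> R) l :
  lsum (map (fun x => f x + g x) l) = lsum (map f l) + lsum (map g l).
Proof. induction l; simpl; [ring | rewrite IHl; ring]. Qed.

Lemma lsum_minus {A} (f g : A -> R) l :
  lsum (map f l) - lsum (map g l) = lsum (map (fun x => f x - g x) l).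
Proof. induction l; simpl; [ring | rewrite <- IHl; ring]. Qed.

Lemma lsum_const {A} c (l : list A) : lsum (map (fun _ => c) l) = INR (length l) * c.
Proof. induction l; simpl length; [simpl; ring |]. rewrite S_INR. simpl. fold lsum. rewrite IHl. ring. Qed.

Lemma lprod_const {A} c (l : list A) : lprod (map (fun _ => c) l) = c ^ length l.
Proof. induction l; simpl; auto. rewrite IHl. ring. Qed.

Lemma lsum_ge0 {A} (f : A -> R) l : (forall x, In x l -> 0 <= f x) -> 0 <= lsum (map f l).
Proof.
  intros H. apply Rle_trans with (lsum (map (fun _ => 0) l)).
  - rewrite lsum_const. lra.
  - apply lsum_le. exact H.
Qed.

Lemma lsum_abs {A} (f : A -> R) l :
  Rabs (lsum (map f l)) <= lsum (map (fun x => Rabs (f x)) l).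
Proof.
  induction l; simpl; [rewrite Rabs_R0; lra |].
  eapply Rle_trans; [apply Rabs_triang | lra].
Qed.

Lemma lsum_flat_map {A B} (f : B -> R) (g : A -> list B) l :
  lsum (map f (flat_map g l)) = lsum (map (fun x => lsum (map f (g x))) l).
Proof. induction l; simpl; auto. rewrite map_app, lsum_app, IHl. reflexivity. Qed.

Lemma lsum_list_prod {A B} (f : A * B -> R) l1 l2 :
  lsum (map f (list_prod l1 l2)) = lsum (map (fun u => lsum (map (fun j => f (u, j)) l2)) l1).
Proof. induction l1; simpl; auto. rewrite map_app, lsum_app, IHl1, map_map. reflexivity. Qed.

Lemma lsum_filter_le {A} (P : A -> bool) (f g : A -> R) l :
  (forall x, In x l -> P x = true -> g x <= f x) -> (forall x, In x l -> 0 <= f x) ->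
  lsum (map g (filter P l)) <= lsum (map f l).
Proof.
  induction l; simpl; intros H1 H2; [lra |].
  assert (IH := IHl (fun x h => H1 x (or_intror h)) (fun x h => H2 x (or_intror h))).
  pose proof (H2 a (or_introl eq_refl)).
  destruct (P a) eqn:E; simpl; [pose proof (H1 a (or_introl eq_refl) E) |]; lra.
Qed.

Lemma lsum_incl {A} (f : A -> R) (l1 l2 : list A) :
  NoDup l1 -> incl l1 l2 -> (forall x, In x l2 -> 0 <= f x) -> lsum (map f l1) <= lsum (map f l2).
Proof.
  revert l2. induction l1 as [|x l1 IH]; intros l2 Hnd Hinc Hpos.
  - simpl. apply lsum_ge0; auto.
  - inversion Hnd; subst.
    assert (Hx : In x l2) by (apply Hinc; simpl; auto).
    apply in_split in Hx. destruct Hx as [u [v ->]].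
    assert (Hrest : lsum (map f l1) <= lsum (map f (u ++ v))).
    { apply IH; auto.
      - intros y Hy. assert (Hy2 : In y (u ++ x :: v)) by (apply Hinc; simpl; auto).
        apply in_app_or in Hy2. apply in_or_app. destruct Hy2 as [H|[H|H]]; auto. subst; contradiction.
      - intros y Hy. apply Hpos. apply in_app_or in Hy. apply in_or_app. destruct Hy; simpl; auto. }
    rewrite map_app, lsum_app in Hrest |- *. simpl. lra.
Qed.

Lemma lsum_nth_le {A} (g : A -> R) (d : A) (l : list A) m :
  g d = 0 -> (forall x, In x l -> 0 <= g x) ->
  lsum (map (fun j => g (nth j l d)) (seq 0 m)) <= lsum (map g l).
Proof.
  intros Hd. revert m. induction l as [|x l IH]; intros m Hpos.
  - rewrite (lsum_ext _ (fun _ => 0)) by (intros j _; destruct j; auto).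
    rewrite lsum_const. simpl. lra.
  - destruct m.
    + simpl. apply (lsum_ge0 g (x :: l)); auto.
    + change (seq 0 (S m)) with (0%nat :: seq 1 m). rewrite <- seq_shift, map_cons, map_map.
      simpl. pose proof (IH m (fun y h => Hpos y (or_intror h))). unfold lsum in *. lra.
Qed.

Lemma lsum_rev_seq (f : nat -> R) M :
  lsum (map f (seq 0 M)) = lsum (map (fun j => f (M - 1 - j)%nat) (seq 0 M)).
Proof.
  induction M; auto.
  rewrite seq_S at 1. rewrite map_app, lsum_app, IHM.
  change (seq 0 (S M)) with (0%nat :: seq 1 M). rewrite <- seq_shift.
  cbn [map lsum fold_right]. rewrite map_map. fold lsum.
  replace (S M - 1 - 0)%nat with M by lia. replace (0 + M)%nat with M by lia.
  rewrite (lsum_ext (fun x => f (S M - 1 - S x)%nat) (fun j => f (M - 1 - j)%nat)) by (intros; f_equal; lia).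
  ring.
Qed.

(** * Entries of the pure diagrams and of the weighted Betti table *)

Lemma fact_pos_R n : 0 < INR (fact n).
Proof. apply lt_0_INR, lt_O_fact. Qed.

Definition binomR (n j : nat) : R := INR (fact n) / (INR (fact j) * INR (fact (n - j))).

Lemma binomR_pos n j : 0 < binomR n j.
Proof.
  unfold binomR. pose proof (fact_pos_R n). pose proof (fact_pos_R j). pose proof (fact_pos_R (n - j)).
  apply Rdiv_lt_0_compat; auto. apply Rmult_lt_0_compat; auto.
Qed.

Lemma lprod_inv_rising a k s j : INR a + s = INR j + 1 ->
  lprod (map (fun l => / (INR l + s)) (seq a k)) = INR (fact j) / INR (fact (j + k)).
Proof.
  intros H. induction k.
  - rewrite Nat.add_0_r. simpl. pose proof (fact_pos_R j). field. lra.
  - rewrite seq_S, map_app, lprod_app, IHk. simpl. rewrite Rmult_1_r.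
    replace (j + S k)%nat with (S (j + k)) by lia. rewrite fact_simpl, mult_INR.
    replace (INR (a + k) + s) with (INR (S (j + k))) by (rewrite S_INR, !plus_INR; lra).
    pose proof (fact_pos_R (j + k)). pose proof (fact_pos_R j).
    assert (0 < INR (S (j + k))) by (apply lt_0_INR; lia). field. lra.
Qed.

Lemma lprod_inv_falling N a k : (a + k <= N)%nat ->
  lprod (map (fun l => / (INR N - INR l)) (seq a k)) = INR (fact (N - a - k)) / INR (fact (N - a)).
Proof.
  intros H. induction k.
  - rewrite Nat.sub_0_r. simpl. pose proof (fact_pos_R (N - a)). field. lra.
  - rewrite seq_S, map_app, lprod_app, IHk by lia. simpl. rewrite Rmult_1_r.
    replace (N - a - k)%nat with (S (N - a - S k)) by lia. rewrite fact_simpl, mult_INR.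
    replace (INR N - INR (a + k)) with (INR (S (N - a - S k)))
      by (rewrite S_INR, !minus_INR, plus_INR, S_INR by lia; lra).
    pose proof (fact_pos_R (N - a - S k)). pose proof (fact_pos_R (N - a)).
    assert (0 < INR (S (N - a - S k))) by (apply lt_0_INR; lia). field. lra.
Qed.

Lemma lprod_skip p n f : (p < n)%nat ->
  lprod (map f (filter (fun l => negb (Nat.eqb l p)) (seq 0 n))) =
  lprod (map f (seq 0 p)) * lprod (map f (seq (S p) (n - S p))).
Proof.
  intros H. replace n with (p + (1 + (n - S p)))%nat at 1 by lia.
  rewrite !seq_app, !filter_app. simpl. rewrite Nat.eqb_refl. simpl.
  rewrite !forallb_filter_id, map_app, lprod_app, Nat.add_1_r; auto;
    apply forallb_forall; intros x Hx; apply in_seq in Hx; apply Bool.negb_true_iff, Nat.eqb_neq; lia.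
Qed.

Lemma dseq_below i l : (S l < i)%nat -> dseq i l = S l.
Proof. intros H. unfold dseq. rewrite (proj2 (Nat.ltb_lt _ _) H). reflexivity. Qed.

Lemma dseq_above i l : (i <= S l)%nat -> dseq i l = S (S l).
Proof. intros H. unfold dseq. rewrite (proj2 (Nat.ltb_ge _ _) H). reflexivity. Qed.

Lemma Rabs_INR_dist a b : (b <= a)%nat -> Rabs (INR a - INR b) = INR a - INR b.
Proof. intros H. apply Rabs_pos_eq. pose proof (le_INR _ _ H). lra. Qed.

Lemma Rabs_INR_dist' a b : (a <= b)%nat -> Rabs (INR a - INR b) = INR b - INR a.
Proof. intros H. rewrite <- Rabs_Ropp, Ropp_minus_distr. apply Rabs_INR_dist, H. Qed.

Lemma pure_entry_row1 r i p : (p + 2 <= i <= r)%nat ->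
  pure_entry r i p 1 = binomR (r - 2) p * INR (i - S p) / INR (r - 1 - p).
Proof.
  intros H. unfold pure_entry. rewrite (dseq_below i p) by lia.
  replace (S p - p)%nat with 1%nat by lia. cbn [Nat.eqb].
  rewrite lprod_skip by lia.
  replace (r - 1 - S p)%nat with ((i - 2 - p) + (r - i))%nat by lia.
  rewrite seq_app, map_app, lprod_app.
  replace (S p + (i - 2 - p))%nat with (i - 1)%nat by lia.
  rewrite (lprod_ext _ (fun l => / (INR p - INR l)) (seq 0 p)),
    (lprod_ext _ (fun l => / (INR l + - INR p)) (seq (S p) (i - 2 - p))),
    (lprod_ext _ (fun l => / (INR l + (1 - INR p))) (seq (i - 1) (r - i))).
  2-4: intros l Hl; apply in_seq in Hl.
  2: rewrite dseq_above, Rabs_INR_dist, !S_INR by lia; f_equal; ring.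
  2: rewrite dseq_below, Rabs_INR_dist, !S_INR by lia; f_equal; ring.
  2: rewrite dseq_below, Rabs_INR_dist', !S_INR by lia; f_equal; ring.
  rewrite (lprod_inv_falling p 0 p), (lprod_inv_rising _ _ _ 0), (lprod_inv_rising _ _ _ (i - S p));
    try lia; try (rewrite ?minus_INR, ?S_INR by lia; simpl; lra).
  replace (p - 0 - p)%nat with 0%nat by lia. rewrite Nat.sub_0_r.
  replace (i - S p + (r - i))%nat with (S (r - 2 - p)) by lia.
  replace (r - 1 - p)%nat with (S (r - 2 - p)) by lia.
  replace (i - S p)%nat with (S (i - 2 - p)) by lia.
  replace (0 + (i - 2 - p))%nat with (i - 2 - p)%nat by lia.
  unfold binomR. rewrite !fact_simpl, !mult_INR. simpl (INR (fact 0)).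
  pose proof (fact_pos_R p). pose proof (fact_pos_R (i - 2 - p)). pose proof (fact_pos_R (r - 2 - p)).
  assert (0 < INR (S (r - 2 - p))) by (apply lt_0_INR; lia).
  assert (0 < INR (S (i - 2 - p))) by (apply lt_0_INR; lia).
  field. repeat split; lra.
Qed.

Lemma pure_entry_row2 r i p : (1 <= i <= S p)%nat -> (p + 2 <= r)%nat ->
  pure_entry r i p 2 = binomR (r - 2) p * INR (S (S p) - i) / INR (S p).
Proof.
  intros H Hr. unfold pure_entry. rewrite (dseq_above i p) by lia.
  replace (S (S p) - p)%nat with 2%nat by lia. cbn [Nat.eqb].
  rewrite lprod_skip by lia.
  replace p with ((i - 1) + (S p - i))%nat at 1 by lia.
  rewrite seq_app, map_app, lprod_app. replace (0 + (i - 1))%nat with (i - 1)%nat by lia.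
  rewrite (lprod_ext _ (fun l => / (INR (S p) - INR l)) (seq 0 (i - 1))),
    (lprod_ext _ (fun l => / (INR p - INR l)) (seq (i - 1) (S p - i))),
    (lprod_ext _ (fun l => / (INR l + - INR p)) (seq (S p) (r - 1 - S p))).
  2-4: intros l Hl; apply in_seq in Hl.
  2: rewrite dseq_above, Rabs_INR_dist, !S_INR by lia; f_equal; ring.
  2: rewrite dseq_above, Rabs_INR_dist', !S_INR by lia; f_equal; ring.
  2: rewrite dseq_below, Rabs_INR_dist', !S_INR by lia; f_equal; ring.
  rewrite (lprod_inv_falling (S p) 0 (i - 1)), (lprod_inv_falling p (i - 1) (S p - i)),
    (lprod_inv_rising _ _ _ 0); try lia; try (rewrite S_INR; simpl; lra).
  replace (S p - 0 - (i - 1))%nat with (S (S p - i)) by lia.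
  replace (p - (i - 1) - (S p - i))%nat with 0%nat by lia.
  replace (p - (i - 1))%nat with (S p - i)%nat by lia.
  replace (0 + (r - 1 - S p))%nat with (r - 2 - p)%nat by lia.
  replace (S (S p) - i)%nat with (S (S p - i)) by lia.
  unfold binomR. rewrite Nat.sub_0_r, !fact_simpl, !mult_INR. simpl (INR (fact 0)).
  pose proof (fact_pos_R p). pose proof (fact_pos_R (S p - i)). pose proof (fact_pos_R (r - 2 - p)).
  assert (0 < INR (S p)) by (apply lt_0_INR; lia).
  assert (0 < INR (S (S p - i))) by (apply lt_0_INR; lia).
  field. repeat split; lra.
Qed.

Lemma pure_entry_row1_zero r i p : (i <= S p)%nat -> pure_entry r i p 1 = 0.
Proof.
  intros H. unfold pure_entry. rewrite dseq_above by lia.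
  replace (S (S p) - p)%nat with 2%nat by lia. reflexivity.
Qed.

Lemma pure_entry_row2_zero r i p : (S (S p) <= i)%nat -> pure_entry r i p 2 = 0.
Proof.
  intros H. unfold pure_entry. rewrite dseq_below by lia.
  replace (S p - p)%nat with 1%nat by lia. reflexivity.
Qed.

Definition weight1 (p i : nat) : R := INR (i - S p).
Definition weight2 (p i : nat) : R := INR (S (S p) - i).

Definition wsum (h : R -> R) (r : nat) (w : nat -> R) (x : nat -> R) : R :=
  lsum (map (fun i => h (INR i / INR r) * w i * x i) (seq 1 r)).

Definition mass (h : R -> R) (r : nat) (w : nat -> R) : R := wsum h r w (fun _ => 1).

Lemma betti_entry_row1 h r x p : (p + 2 <= r)%nat ->
  betti_entry h r x p 1 = binomR (r - 2) p / INR (r - 1 - p) * wsum h r (weight1 p) x.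
Proof.
  intros Hr. unfold betti_entry, wsum, weight1. unfold Rdiv at 1. rewrite <- lsum_scal.
  apply lsum_ext. intros i Hi. apply in_seq in Hi.
  destruct (le_lt_dec i (S p)).
  - rewrite pure_entry_row1_zero by lia. replace (i - S p)%nat with 0%nat by lia. simpl. ring.
  - rewrite pure_entry_row1 by lia. unfold Rdiv. ring.
Qed.

Lemma betti_entry_row2 h r x p : (p + 2 <= r)%nat ->
  betti_entry h r x p 2 = binomR (r - 2) p / INR (S p) * wsum h r (weight2 p) x.
Proof.
  intros Hr. unfold betti_entry, wsum, weight2. unfold Rdiv at 1. rewrite <- lsum_scal.
  apply lsum_ext. intros i Hi. apply in_seq in Hi.
  destruct (le_lt_dec i (S p)).
  - rewrite pure_entry_row2 by lia. unfold Rdiv. ring.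
  - rewrite pure_entry_row2_zero by lia. replace (S (S p) - i)%nat with 0%nat by lia. simpl. ring.
Qed.

Lemma nat_arch x : exists N : nat, x < INR N.
Proof.
  destruct (archimed x) as [H _]. destruct (Z_le_gt_dec (up x) 0).
  - exists 1%nat. apply IZR_le in l. simpl. lra.
  - exists (Z.to_nat (up x)). rewrite INR_IZR_INZ, Z2Nat.id by lia. lra.
Qed.

Lemma nat_up x : x <= INR (Z.to_nat (up x)).
Proof.
  destruct (archimed x) as [H _]. destruct (Z_le_gt_dec (up x) 0).
  - apply IZR_le in l. pose proof (pos_INR (Z.to_nat (up x))). lra.
  - rewrite INR_IZR_INZ, Z2Nat.id by lia. lra.
Qed.

Lemma eventually_ge (x : R) : exists N : nat, forall r, (N <= r)%nat -> x <= INR r.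
Proof.
  destruct (nat_arch x) as [N HN]. exists N. intros r Hr.
  assert (INR N <= INR r) by (apply le_INR; auto). lra.
Qed.

Lemma Un_cv_eventually_ext (u v : nat -> R) l :
  (exists N, forall n, (N <= n)%nat -> u n = v n) -> Un_cv u l -> Un_cv v l.
Proof.
  intros [N HN] H eps He. destruct (H eps He) as [N1 HN1]. exists (max N N1).
  intros n Hn. rewrite <- HN by lia. apply HN1; lia.
Qed.

Lemma Un_cv_ext (u v : nat -> R) l : (forall n, u n = v n) -> Un_cv u l -> Un_cv v l.
Proof. intros H. apply Un_cv_eventually_ext. exists 0%nat. auto. Qed.

Lemma Un_cv_const c : Un_cv (fun _ => c) c.
Proof. intros e He; exists 0%nat; intros; unfold R_dist; rewrite Rminus_diag, Rabs_R0; lra. Qed.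

Lemma Un_cv_scal (u : nat -> R) c l : Un_cv u l -> Un_cv (fun n => c * u n) (c * l).
Proof. intros H. apply CV_mult; auto. apply Un_cv_const. Qed.

Lemma Un_cv_shift (u : nat -> R) k l : Un_cv u l -> Un_cv (fun r => u (r - k)%nat) l.
Proof.
  intros H e He. destruct (H e He) as [N HN]. exists (N + k)%nat. intros n Hn.
  apply (HN (n - k)%nat). lia.
Qed.

Lemma Un_cv_eventually_bounded (u : nat -> R) l :
  Un_cv u l -> exists K N, 1 <= K /\ forall n, (N <= n)%nat -> Rabs (u n) <= K.
Proof.
  intros H. destruct (H 1 Rlt_0_1) as [N HN]. exists (Rabs l + 1), N.
  split; [pose proof (Rabs_pos l); lra |]. intros n Hn.
  specialize (HN n Hn). unfold R_dist in HN.
  pose proof (Rabs_triang (u n - l) l). replace (u n - l + l) with (u n) in H0 by ring. lra.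
Qed.

Lemma Un_cv_squeeze0 (u v : nat -> R) :
  (exists N, forall n, (N <= n)%nat -> Rabs (u n) <= v n) -> Un_cv v 0 -> Un_cv u 0.
Proof.
  intros [N HN] H eps He. destruct (H eps He) as [N1 HN1]. exists (max N N1).
  intros n Hn. specialize (HN n ltac:(lia)). specialize (HN1 n ltac:(lia)).
  unfold R_dist in *. rewrite Rminus_0_r in *. pose proof (Rle_abs (v n)). lra.
Qed.

Lemma Un_cv_of_diff (u : nat -> R) l : Un_cv (fun n => u n - l) 0 -> Un_cv u l.
Proof.
  intros H eps He. destruct (H eps He) as [N HN]. exists N. intros n Hn.
  specialize (HN n Hn). unfold R_dist in *. rewrite Rminus_0_r in HN. auto.
Qed.

Lemma Un_cv_ratio1 (u v e : nat -> R) :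
  (exists N, forall r, (N <= r)%nat -> 0 < v r /\ Rabs (u r - v r) <= e r * v r) ->
  Un_cv e 0 -> Un_cv (fun r => u r / v r) 1.
Proof.
  intros [N HN] He. apply Un_cv_of_diff. apply Un_cv_squeeze0 with (v := e); auto.
  exists N. intros r Hr. destruct (HN r Hr) as [Hv Hb].
  replace (u r / v r - 1) with ((u r - v r) / v r) by (field; lra).
  unfold Rdiv. rewrite Rabs_mult, Rabs_inv, (Rabs_pos_eq (v r)) by lra.
  apply (Rmult_le_reg_r (v r)); auto. rewrite Rmult_assoc, Rinv_l by lra. lra.
Qed.

Lemma Un_cv_inv_sqrt : Un_cv (fun r => / sqrt (INR r)) 0.
Proof.
  intros eps He. destruct (nat_arch (/ eps ^ 2)) as [N HN]. exists (S N). intros n Hn.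
  unfold R_dist. rewrite Rminus_0_r.
  assert (Hn' : INR N < INR n) by (apply lt_INR; lia).
  assert (0 < INR n) by (apply lt_0_INR; lia).
  assert (Hs : 0 < sqrt (INR n)) by (apply sqrt_lt_R0; auto).
  rewrite Rabs_pos_eq by (left; apply Rinv_0_lt_compat; auto).
  assert (/ eps < sqrt (INR n)).
  { rewrite <- (sqrt_Rsqr (/ eps)) by (left; apply Rinv_0_lt_compat; auto).
    apply sqrt_lt_1_alt. split; [apply Rle_0_sqr |].
    replace (Rsqr (/ eps)) with (/ eps ^ 2) by (unfold Rsqr; field; lra). lra. }
  apply (Rmult_lt_reg_l (sqrt (INR n))); auto. rewrite Rinv_r by lra.
  apply (Rmult_lt_reg_l (/ eps)); [apply Rinv_0_lt_compat; auto |].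
  replace (/ eps * (sqrt (INR n) * eps)) with (sqrt (INR n)) by (field; lra). lra.
Qed.

Lemma Un_cv_inv_nat : Un_cv (fun r => / INR r) 0.
Proof.
  apply Un_cv_squeeze0 with (v := fun r => / sqrt (INR r) * / sqrt (INR r)).
  - exists 1%nat. intros n Hn. assert (0 < INR n) by (apply lt_0_INR; lia).
    rewrite <- Rinv_mult, sqrt_sqrt by lra.
    rewrite Rabs_pos_eq; [lra | left; apply Rinv_0_lt_compat; auto].
  - replace 0 with (0 * 0) by ring. apply CV_mult; apply Un_cv_inv_sqrt.
Qed.

Lemma Un_cv_inv_sqrt_comp (w : nat -> R) :
  Un_cv (fun s => / w s) 0 -> Un_cv (fun s => / sqrt (w s)) 0.
Proof.
  intros H. pose proof (continuity_seq sqrt _ 0 (continuity_pt_sqrt 0 (Rle_refl 0)) H) as H1.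
  rewrite sqrt_0 in H1. eapply Un_cv_ext; [| exact H1]. intros s. simpl. apply sqrt_inv.
Qed.

Lemma Un_cv_r_over_r2 : Un_cv (fun r => INR r / INR (r - 2)) 1.
Proof.
  apply Un_cv_eventually_ext with (u := fun r => 1 + 2 * / INR (r - 2)).
  - exists 3%nat. intros n Hn. assert (INR 3 <= INR n) by (apply le_INR; lia).
    rewrite minus_INR by lia. simpl in *. field. lra.
  - assert (H : Un_cv (fun r => 1 + 2 * / INR (r - 2)) (1 + 2 * 0)).
    { apply CV_plus; [apply Un_cv_const |].
      apply Un_cv_scal, (Un_cv_shift (fun r => / INR r)), Un_cv_inv_nat. }
    rewrite Rmult_0_r, Rplus_0_r in H. exact H.
Qed.

(** * Central behaviour of binomial coefficients *)

Lemma ln_bounds u : -1/2 <= u -> u - 2 * u ^ 2 <= ln (1 + u) <= u.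
Proof.
  intros H. assert (Hp : 0 < 1 + u) by lra.
  assert (Hle : forall y, 0 < y -> ln y <= y - 1)
    by (intros y Hy; pose proof (exp_ineq1_le (ln y)); rewrite exp_ln in *; lra).
  split.
  - pose proof (Hle (/ (1 + u)) ltac:(apply Rinv_0_lt_compat; auto)) as H0.
    rewrite ln_Rinv in H0 by auto.
    assert (/ (1 + u) - 1 = - u / (1 + u)) by (field; lra).
    assert (u / (1 + u) >= u - 2 * u ^ 2).
    { apply Rle_ge. apply (Rmult_le_reg_r (1 + u)); auto. unfold Rdiv.
      rewrite Rmult_assoc, Rinv_l by lra. nra. }
    unfold Rdiv in *. lra.
  - pose proof (Hle (1 + u) Hp). lra.
Qed.

Lemma binomR_succ n j : (j < n)%nat -> binomR n (S j) = binomR n j * INR (n - j) / INR (S j).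
Proof.
  intros H. unfold binomR. replace (n - j)%nat with (S (n - S j)) by lia.
  rewrite !fact_simpl, !mult_INR.
  pose proof (fact_pos_R n). pose proof (fact_pos_R j). pose proof (fact_pos_R (n - S j)).
  assert (0 < INR (S j)) by (apply lt_0_INR; lia). assert (0 < INR (S (n - S j))) by (apply lt_0_INR; lia).
  field. repeat split; lra.
Qed.

Lemma binomR_sym n j : (j <= n)%nat -> binomR n (n - j) = binomR n j.
Proof.
  intros H. unfold binomR. replace (n - (n - j))%nat with j by lia.
  rewrite (Rmult_comm (INR (fact (n - j)))). reflexivity.
Qed.

Lemma log_binomR_step n j D :
  (j < n)%nat -> INR n / 2 <= INR j + 1 -> 1 <= D -> 4 * D <= INR n ->
  Rabs (2 * INR j + 1 - INR n) <= D ->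
  Rabs (ln (binomR n (S j) / binomR n j) + 2 * (2 * INR j + 1 - INR n) / INR n)
    <= 12 * D ^ 2 / INR n ^ 2.
Proof.
  intros Hjn HJ HD HDn Hw. assert (Hn : 0 < INR n) by lra.
  assert (HjnR : INR j < INR n) by (apply lt_INR; auto).
  set (w := 2 * INR j + 1 - INR n) in *. set (u := - w / (INR j + 1)).
  assert (Hratio : binomR n (S j) / binomR n j = 1 + u).
  { rewrite binomR_succ by auto. pose proof (binomR_pos n j).
    rewrite minus_INR, S_INR by lia. unfold u, w. field. lra. }
  set (q := 2 * D / INR n).
  assert (Hq : q * INR n = 2 * D) by (unfold q; field; lra).
  assert (Hq2 : q <= 1/2) by nra.
  assert (Hua : Rabs u <= q).
  { assert (Hu : Rabs u * (INR j + 1) = Rabs w).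
    { unfold u. unfold Rdiv. rewrite Rabs_mult, Rabs_Ropp, Rabs_inv, (Rabs_pos_eq (INR j + 1)) by lra.
      field. lra. }
    pose proof (Rabs_pos u). nra. }
  assert (Hlin : Rabs (u + 2 * w / INR n) <= q ^ 2).
  { assert (Hl : (u + 2 * w / INR n) * (INR n * (INR j + 1)) = w * (w + 1)) by (unfold u, w; field; lra).
    assert (Habs : Rabs (u + 2 * w / INR n) * (INR n * (INR j + 1)) <= D * (2 * D)).
    { rewrite <- (Rabs_pos_eq (INR n * (INR j + 1))) by nra. rewrite <- Rabs_mult, Hl, Rabs_mult.
      pose proof (Rabs_triang w 1). rewrite Rabs_R1 in H.
      apply Rmult_le_compat; try apply Rabs_pos; lra. }
    pose proof (Rabs_pos (u + 2 * w / INR n)). set (A := Rabs (u + 2 * w / INR n)) in *.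
    assert (Hnj : INR n * INR n <= 2 * (INR n * (INR j + 1))) by nra.
    assert (Hsq : A * (INR n * INR n) <= q ^ 2 * (INR n * INR n)).
    { apply Rle_trans with (2 * (A * (INR n * (INR j + 1)))); [nra |].
      replace (q ^ 2 * (INR n * INR n)) with ((q * INR n) ^ 2) by ring. rewrite Hq. lra. }
    apply Rmult_le_reg_r with (INR n * INR n); nra. }
  assert (Hub : -1/2 <= u) by (pose proof (Rle_abs (- u)); rewrite Rabs_Ropp in H; lra).
  pose proof (ln_bounds u Hub) as Hln.
  assert (Hu2 : u ^ 2 <= q ^ 2) by (rewrite <- (pow2_abs u); apply pow_incr; split; [apply Rabs_pos | auto]).
  replace (12 * D ^ 2 / INR n ^ 2) with (3 * q ^ 2) by (unfold q; field; lra).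
  rewrite Hratio.
  replace (ln (1 + u) + 2 * w / INR n) with ((ln (1 + u) - u) + (u + 2 * w / INR n)) by ring.
  eapply Rle_trans; [apply Rabs_triang |].
  assert (Rabs (ln (1 + u) - u) <= 2 * q ^ 2) by (apply Rabs_le; split; nra). lra.
Qed.

Lemma log_binomR_telescope n c D :
  (n <= 2 * c + 2)%nat -> 1 <= D -> 4 * D <= INR n ->
  forall k, (c + k <= n)%nat ->
  (forall j, (c <= j < c + k)%nat -> Rabs (2 * INR j + 1 - INR n) <= D) ->
  Rabs (ln (binomR n (c + k) / binomR n c)
        + 2 * (INR (c + k) - INR c) * (INR (c + k) + INR c - INR n) / INR n)
    <= INR k * (12 * D ^ 2 / INR n ^ 2).
Proof.
  intros Hc HD HDn. assert (Hn : 0 < INR n) by lra.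
  induction k; intros Hk Hj.
  - rewrite Nat.add_0_r. unfold Rdiv. rewrite Rinv_r, ln_1 by (apply Rgt_not_eq, binomR_pos).
    simpl. replace (0 + 2 * (INR c - INR c) * (INR c + INR c - INR n) * / INR n) with 0 by ring.
    rewrite Rabs_R0. lra.
  - set (j := (c + k)%nat) in *. replace (c + S k)%nat with (S j) by (unfold j; lia).
    pose proof (IHk ltac:(lia) (fun j' H' => Hj j' ltac:(lia))) as IH.
    assert (HJ : INR n / 2 <= INR j + 1).
    { assert (INR n <= INR (2 * j + 2)) by (apply le_INR; unfold j; lia).
      rewrite plus_INR, mult_INR in H. simpl in H. lra. }
    pose proof (log_binomR_step n j D ltac:(unfold j; lia) HJ HD HDn (Hj j ltac:(unfold j; lia))) as Hstep.
    pose proof (binomR_pos n j). pose proof (binomR_pos n (S j)). pose proof (binomR_pos n c).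
    replace (binomR n (S j) / binomR n c) with ((binomR n j / binomR n c) * (binomR n (S j) / binomR n j))
      by (field; lra).
    rewrite ln_mult by (apply Rdiv_lt_0_compat; auto).
    rewrite S_INR, S_INR.
    replace (ln (binomR n j / binomR n c) + ln (binomR n (S j) / binomR n j)
             + 2 * (INR j + 1 - INR c) * (INR j + 1 + INR c - INR n) / INR n)
      with ((ln (binomR n j / binomR n c) + 2 * (INR j - INR c) * (INR j + INR c - INR n) / INR n)
            + (ln (binomR n (S j) / binomR n j) + 2 * (2 * INR j + 1 - INR n) / INR n))
      by (field; lra).
    eapply Rle_trans; [apply Rabs_triang | lra].
Qed.

Definition mid (r : nat) : nat := (r / 2)%nat.

Lemma mid_bounds r : (2 * mid r <= r <= 2 * mid r + 1)%nat.
Proof.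
  unfold mid. pose proof (Nat.div_mod r 2 ltac:(lia)). pose proof (Nat.mod_upper_bound r 2 ltac:(lia)). lia.
Qed.

Lemma mid_bounds_R r : 2 * INR (mid r) <= INR r <= 2 * INR (mid r) + 1.
Proof.
  pose proof (mid_bounds r) as [H1 H2]. apply le_INR in H1, H2.
  rewrite plus_INR, mult_INR in *. simpl in *. lra.
Qed.

Lemma log_binomR_vs_mid r p : (2 <= r)%nat -> (p <= r - 2)%nat ->
  let n := (r - 2)%nat in let m := mid r in
  let D := Rabs (2 * INR p - INR r) + 4 in
  4 * D <= INR n ->
  Rabs (ln (binomR n p / binomR n m) + 2 * (INR p - INR m) * (INR p + INR m - INR n) / INR n)
    <= 12 * D ^ 3 / INR n ^ 2.
Proof.
  intros Hr Hp n m D HD.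
  pose proof (mid_bounds r) as Hm. pose proof (mid_bounds_R r) as Hm2. fold m in Hm, Hm2.
  assert (HD1 : 1 <= D) by (unfold D; pose proof (Rabs_pos (2 * INR p - INR r)); lra).
  assert (Hyl := Rle_abs (2 * INR p - INR r)). assert (Hyr := Rle_abs (- (2 * INR p - INR r))).
  rewrite Rabs_Ropp in Hyr. assert (HDd : D = Rabs (2 * INR p - INR r) + 4) by reflexivity.
  assert (HnR : INR n = INR r - 2) by (unfold n; rewrite minus_INR by lia; simpl; lra).
  assert (Hn16 : (16 <= n)%nat) by (apply INR_le; simpl; lra).
  assert (Hfinal : forall k, INR k <= D ->
            INR k * (12 * D ^ 2 / INR n ^ 2) <= 12 * D ^ 3 / INR n ^ 2).
  { intros k Hk. replace (12 * D ^ 3 / INR n ^ 2) with (D * (12 * D ^ 2 / INR n ^ 2)) by (field; lra).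
    apply Rmult_le_compat_r; auto. apply Rmult_le_pos; [nra | left; apply Rinv_0_lt_compat; nra]. }
  destruct (le_lt_dec m p) as [Hmp | Hmp].
  - pose proof (log_binomR_telescope n m D ltac:(lia) HD1 HD (p - m) ltac:(unfold n in *; lia)) as C.
    replace (m + (p - m))%nat with p in C by lia.
    eapply Rle_trans; [apply C | apply Hfinal; rewrite minus_INR by lia; lra].
    intros j Hj. assert (INR m <= INR j) by (apply le_INR; lia).
    assert (INR j + 1 <= INR p) by (rewrite <- S_INR; apply le_INR; lia).
    apply Rabs_le. lra.
  - (* below the middle, use the symmetry [C(n,j) = C(n,n-j)] *)
    rewrite <- (binomR_sym n p), <- (binomR_sym n m) by (unfold n in *; lia).
    pose proof (log_binomR_telescope n (n - m) D ltac:(lia) HD1 HD (m - p) ltac:(unfold n in *; lia)) as C.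
    replace (n - m + (m - p))%nat with (n - p)%nat in C by (unfold n in *; lia).
    replace (2 * (INR p - INR m) * (INR p + INR m - INR n) / INR n)
      with (2 * (INR (n - p) - INR (n - m)) * (INR (n - p) + INR (n - m) - INR n) / INR n)
      by (rewrite !minus_INR by (unfold n in *; lia); field; lra).
    eapply Rle_trans; [apply C | apply Hfinal; rewrite minus_INR by lia; lra].
    intros j Hj. assert (INR (n - m) <= INR j) by (apply le_INR; lia).
    assert (INR j + 1 <= INR (n - p)) by (rewrite <- S_INR; apply le_INR; lia).
    rewrite !minus_INR in * by (unfold n in *; lia).
    apply Rabs_le. lra.
Qed.

(* Under [(2 p_r - r) / sqrt r -> a], the ratio [C(r-2,p_r) / C(r-2,mid r)]
   tends to [exp(-a^2/2)]: the error term of [log_binomR_vs_mid] is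
   [O(r^{3/2} / r^2)], and the main term converges to [-a^2/2]. *)
Section BinomialRatio.
Variable p : nat -> nat.
Variable a : R.
Hypothesis Hp : forall r, (2 <= r)%nat -> (p r <= r - 2)%nat.
Hypothesis Ha : Un_cv (fun r => (2 * INR (p r) - INR r) / sqrt (INR r)) a.

Let s r := (2 * INR (p r) - INR r) / sqrt (INR r).

Lemma deviation_eventually_small : exists K N, 1 <= K /\ (2 <= N)%nat /\ forall r, (N <= r)%nat ->
  Rabs (2 * INR (p r) - INR r) <= K * sqrt (INR r) /\
  4 * (Rabs (2 * INR (p r) - INR r) + 4) <= INR (r - 2) /\ 1 <= sqrt (INR r) /\
  INR r / 2 <= INR (r - 2).
Proof.
  destruct (Un_cv_eventually_bounded s a Ha) as [K [N0 [HK HN0]]].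
  destruct (nat_arch ((8 * K + 36) ^ 2)) as [N1 HN1].
  exists K, (N0 + N1 + 2)%nat. split; auto. split; [lia |]. intros r Hr.
  assert (Hrr : INR N1 <= INR r) by (apply le_INR; lia).
  assert (Hsq : 8 * K + 36 <= sqrt (INR r)).
  { rewrite <- (sqrt_pow2 (8 * K + 36)) by lra. apply sqrt_le_1_alt. lra. }
  assert (Hss : sqrt (INR r) * sqrt (INR r) = INR r) by (apply sqrt_sqrt, pos_INR).
  assert (Hyb : Rabs (2 * INR (p r) - INR r) <= K * sqrt (INR r)).
  { replace (2 * INR (p r) - INR r) with (s r * sqrt (INR r))
      by (unfold s; field; apply Rgt_not_eq; lra).
    rewrite Rabs_mult, (Rabs_pos_eq (sqrt _)) by apply sqrt_pos.
    apply Rmult_le_compat_r; [apply sqrt_pos | apply HN0; lia]. }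
  assert (HnR : INR (r - 2) = INR r - 2) by (rewrite minus_INR by lia; simpl; lra).
  rewrite HnR. repeat split; nra.
Qed.

Lemma log_binomR_error_cv : Un_cv (fun r => ln (binomR (r - 2) (p r) / binomR (r - 2) (mid r)) +
   2 * (INR (p r) - INR (mid r)) * (INR (p r) + INR (mid r) - INR (r - 2)) / INR (r - 2)) 0.
Proof.
  destruct deviation_eventually_small as [K [N [HK [HN HB]]]].
  apply Un_cv_squeeze0 with (v := fun r => (12 * (K + 4) ^ 3 * 4) * / sqrt (INR r)).
  - exists N. intros r Hr. destruct (HB r Hr) as [H1 [H2 [H3 H4]]].
    eapply Rle_trans; [apply log_binomR_vs_mid; [lia | apply Hp; lia | exact H2] |].
    set (D := Rabs (2 * INR (p r) - INR r) + 4). set (n := INR (r - 2)) in *. set (q := sqrt (INR r)) in *.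
    assert (HD : D <= (K + 4) * q) by (unfold D; nra).
    assert (HD0 : 0 <= D) by (unfold D; pose proof (Rabs_pos (2 * INR (p r) - INR r)); lra).
    assert (Hq2 : q * q = INR r) by (apply sqrt_sqrt, pos_INR).
    assert (Hn : q * q / 2 <= n) by (rewrite Hq2; auto).
    assert (Hq0 : 0 < q) by lra.
    assert (D ^ 3 <= ((K + 4) * q) ^ 3) by (apply pow_incr; auto).
    assert (Hnpos : 0 < n) by nra.
    assert (Hq22 : 0 < q * q / 2) by nra.
    apply Rle_trans with (12 * ((K + 4) * q) ^ 3 / (q * q / 2) ^ 2).
    + unfold Rdiv. apply Rmult_le_compat.
      * apply Rmult_le_pos; [lra | apply pow_le; auto].
      * left. apply Rinv_0_lt_compat. nra.
      * lra.
      * apply Rinv_le_contravar; [apply pow_lt; lra | apply pow_incr; lra].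
    + right. field. lra.
  - replace 0 with ((12 * (K + 4) ^ 3 * 4) * 0) by ring. apply Un_cv_scal, Un_cv_inv_sqrt.
Qed.

(* With [e_r = r - 2 mid r] in [{0,1}], the main term equals
   [-(s_r^2/2) r/(r-2) - 2 s_r r/(sqrt r (r-2)) - e_r (4 - e_r)/(2 (r-2))]. *)
Lemma gaussian_exponent_cv : Un_cv (fun r =>
   - (2 * (INR (p r) - INR (mid r)) * (INR (p r) + INR (mid r) - INR (r - 2)) / INR (r - 2)))
   (- a ^ 2 / 2).
Proof.
  set (e := fun r => INR r - 2 * INR (mid r)).
  apply Un_cv_eventually_ext with (u := fun r => - (s r * s r / 2) * (INR r / INR (r - 2))
     - 2 * s r * (/ sqrt (INR r) * (INR r / INR (r - 2))) - (e r * (4 - e r) / 2) * / INR (r - 2)).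
  - exists 3%nat. intros r Hr.
    assert (HnR : INR (r - 2) = INR r - 2) by (rewrite minus_INR by lia; simpl; lra).
    assert (INR 3 <= INR r) by (apply le_INR; lia). simpl in H.
    assert (0 < sqrt (INR r)) by (apply sqrt_lt_R0; lra).
    assert (Hss : sqrt (INR r) * sqrt (INR r) = INR r) by (apply sqrt_sqrt; lra).
    unfold s, e. rewrite HnR. set (q := sqrt (INR r)) in *. rewrite <- Hss. field. split; nra.
  - replace (- a ^ 2 / 2) with (- (a * a / 2) * 1 - 2 * a * (0 * 1) - 0) by field.
    apply CV_minus; [apply CV_minus |].
    + apply CV_mult; [| apply Un_cv_r_over_r2].
      replace (- (a * a / 2)) with ((- / 2) * (a * a)) by field.
      apply Un_cv_ext with (u := fun r => (- / 2) * (s r * s r)); [intros; field |].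
      apply Un_cv_scal, CV_mult; exact Ha.
    + apply CV_mult; [apply Un_cv_scal; exact Ha |].
      apply CV_mult; [apply Un_cv_inv_sqrt | apply Un_cv_r_over_r2].
    + apply Un_cv_squeeze0 with (v := fun r => 2 * / INR (r - 2)).
      * exists 3%nat. intros r Hr. pose proof (mid_bounds_R r).
        assert (He : 0 <= e r <= 1) by (unfold e; lra).
        assert (0 < INR (r - 2)) by (apply lt_0_INR; lia).
        rewrite Rabs_mult, Rabs_pos_eq, (Rabs_pos_eq (/ _)) by (nra || (left; apply Rinv_0_lt_compat; auto)).
        apply Rmult_le_compat_r; [left; apply Rinv_0_lt_compat; auto | nra].
      * replace 0 with (2 * 0) by ring.
        apply Un_cv_scal, (Un_cv_shift (fun r => / INR r)), Un_cv_inv_nat.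
Qed.

Lemma binomR_ratio_limit :
  Un_cv (fun r => binomR (r - 2) (p r) / binomR (r - 2) (mid r)) (exp (- a ^ 2 / 2)).
Proof.
  assert (Hl : Un_cv (fun r => ln (binomR (r - 2) (p r) / binomR (r - 2) (mid r))) (- a ^ 2 / 2)).
  { pose proof (CV_plus _ _ _ _ log_binomR_error_cv gaussian_exponent_cv) as H.
    rewrite Rplus_0_l in H. eapply Un_cv_ext; [| exact H]. intros r. simpl. ring. }
  pose proof (continuity_seq exp _ _ (derivable_continuous_pt _ _ (derivable_pt_exp _)) Hl) as H.
  eapply Un_cv_ext; [| exact H]. intros r. simpl. apply exp_ln.
  apply Rdiv_lt_0_compat; apply binomR_pos.
Qed.
End BinomialRatio.

(** * Fourth moment of a linear form on a uniform grid

   For a grid of mesh [1/M] of [[0,1]^n], we bound the average over the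
   cells of the fourth power of [S = sum_i a_i (c_i - 1/2)], [c] the cell
   centre, by [(sum_i a_i^2)^2]: this is the discrete Chebyshev estimate
   behind the strong law of large numbers used below. *)

Section Grid.
Variable M : nat.
Hypothesis HM : (1 <= M)%nat.

Lemma INR_M_pos : 0 < INR M.
Proof. apply lt_0_INR; lia. Qed.

Definition cell_offset (j : nat) : R := (INR j + 1/2) / INR M - 1/2.

Lemma cell_offset_sym j : (j < M)%nat -> cell_offset (M - 1 - j) = - cell_offset j.
Proof. intros H. unfold cell_offset. pose proof INR_M_pos. rewrite !minus_INR by lia. simpl. field. lra. Qed.

Lemma cell_offset_bound j : (j < M)%nat -> Rabs (cell_offset j) <= 1/2.
Proof.
  intros H. unfold cell_offset. pose proof INR_M_pos.
  assert (INR j + 1 <= INR M) by (rewrite <- S_INR; apply le_INR; lia).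
  assert (0 <= INR j) by apply pos_INR.
  apply Rabs_le. split.
  - apply Rle_trans with (0 - 1/2); [lra |]. apply Rplus_le_compat_r. apply Rlt_le, Rdiv_lt_0_compat; lra.
  - apply Rle_trans with (1 - 1/2); [| lra]. apply Rplus_le_compat_r.
    apply (Rmult_le_reg_r (INR M)); auto. unfold Rdiv. rewrite Rmult_assoc, Rinv_l; lra.
Qed.

(* Odd moments of the offsets vanish by symmetry. *)
Lemma cell_offset_odd_moment (k : nat) : Nat.odd k = true ->
  lsum (map (fun j => cell_offset j ^ k) (seq 0 M)) = 0.
Proof.
  intros Hk. pose proof (lsum_rev_seq (fun j => cell_offset j ^ k) M) as H.
  rewrite (lsum_ext (fun j => cell_offset (M - 1 - j) ^ k) (fun j => -1 * (cell_offset j ^ k))) in H.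
  - rewrite lsum_scal in H. lra.
  - intros j Hj. apply in_seq in Hj. rewrite cell_offset_sym by lia.
    apply Nat.odd_spec in Hk. destruct Hk as [q ->].
    rewrite !pow_add, !pow_mult. replace ((- cell_offset j) ^ 2) with (cell_offset j ^ 2) by ring. ring.
Qed.

Lemma cell_offset_even_moment (k : nat) :
  lsum (map (fun j => cell_offset j ^ (2 * k)) (seq 0 M)) <= INR M * (1/4) ^ k.
Proof.
  replace (INR M) with (INR (length (seq 0 M))) by (rewrite length_seq; auto).
  rewrite <- lsum_const. apply lsum_le. intros j Hj. apply in_seq in Hj.
  rewrite pow_mult, <- pow2_abs. apply pow_incr. split; [apply pow2_ge_0 |].
  pose proof (cell_offset_bound j ltac:(lia)). pose proof (Rabs_pos (cell_offset j)). nra.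
Qed.

(* Moments of [c + b z_j] over the [M] offsets [z_j]: odd powers of [z_j] drop out. *)
Lemma offset_shift_pow2 c b :
  lsum (map (fun j => (c + b * cell_offset j) ^ 2) (seq 0 M))
  = INR M * c ^ 2 + b ^ 2 * lsum (map (fun j => cell_offset j ^ 2) (seq 0 M)).
Proof.
  rewrite (lsum_ext _ (fun j => c ^ 2 + ((2 * c * b) * cell_offset j ^ 1 + b ^ 2 * cell_offset j ^ 2)))
    by (intros; ring).
  rewrite !lsum_plus, !lsum_scal, cell_offset_odd_moment, lsum_const, length_seq by reflexivity. ring.
Qed.

Lemma offset_shift_pow4 c b :
  lsum (map (fun j => (c + b * cell_offset j) ^ 4) (seq 0 M))
  = INR M * c ^ 4 + 6 * b ^ 2 * c ^ 2 * lsum (map (fun j => cell_offset j ^ 2) (seq 0 M))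
    + b ^ 4 * lsum (map (fun j => cell_offset j ^ 4) (seq 0 M)).
Proof.
  rewrite (lsum_ext _ (fun j => c ^ 4 + ((4 * c ^ 3 * b) * cell_offset j ^ 1
      + ((6 * c ^ 2 * b ^ 2) * cell_offset j ^ 2
      + ((4 * c * b ^ 3) * cell_offset j ^ 3 + b ^ 4 * cell_offset j ^ 4))))) by (intros; ring).
  rewrite !lsum_plus, !lsum_scal, (cell_offset_odd_moment 1), (cell_offset_odd_moment 3), lsum_const, length_seq
    by reflexivity.
  ring.
Qed.

(* The words of length [n] over the alphabet [{0, ..., M-1}]: the cells of the grid. *)
Fixpoint grid_words (n : nat) : list (list nat) :=
  match n with
  | O => [[]]
  | S n => flat_map (fun ds => map (fun j => ds ++ [j]) (seq 0 M)) (grid_words n)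
  end.

Lemma grid_words_spec n ds :
  In ds (grid_words n) -> length ds = n /\ forall d, In d ds -> (d < M)%nat.
Proof.
  revert ds. induction n; simpl; intros ds H.
  - destruct H as [<- | []]. simpl. split; auto. intros d [].
  - apply in_flat_map in H. destruct H as [ds' [H1 H2]]. apply in_map_iff in H2.
    destruct H2 as [j [<- Hj]]. apply in_seq in Hj. destruct (IHn ds' H1) as [Hl Hd].
    rewrite length_app, Hl. simpl. split; [lia |]. intros d Hd'. apply in_app_or in Hd'.
    destruct Hd' as [Hd' | [<- | []]]; auto. lia.
Qed.

Lemma grid_words_length n : length (grid_words n) = (M ^ n)%nat.
Proof.
  induction n; simpl; auto.
  rewrite flat_map_concat_map, length_concat, map_map.
  rewrite (map_ext_in _ (fun _ => M)).
  - rewrite <- IHn. generalize (grid_words n). intros l. induction l; simpl; auto. lia.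
  - intros. rewrite length_map, length_seq. auto.
Qed.

Definition cell_center (ds : list nat) (i : nat) : R := (INR (nth (i - 1) ds 0%nat) + 1/2) / INR M.

Variable a : nat -> R.

Definition grid_sum (n : nat) (ds : list nat) : R :=
  lsum (map (fun i => a i * (cell_center ds i - 1/2)) (seq 1 n)).

Definition sq_norm (n : nat) : R := lsum (map (fun i => a i ^ 2) (seq 1 n)).

Lemma sq_norm_ge0 n : 0 <= sq_norm n.
Proof. apply lsum_ge0. intros. apply pow2_ge_0. Qed.

Lemma sq_norm_S n : sq_norm (S n) = sq_norm n + a (S n) ^ 2.
Proof. unfold sq_norm. rewrite seq_S, map_app, lsum_app. simpl. ring. Qed.

Lemma grid_sum_step n ds j : length ds = n ->
  grid_sum (S n) (ds ++ [j]) = grid_sum n ds + a (S n) * cell_offset j.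
Proof.
  intros Hl. unfold grid_sum. rewrite seq_S, map_app, lsum_app. simpl. f_equal.
  - apply lsum_ext. intros i Hi. apply in_seq in Hi. unfold cell_center. rewrite app_nth1 by lia. reflexivity.
  - unfold cell_center, cell_offset. replace (S n - 1)%nat with n by lia.
    rewrite app_nth2 by lia. rewrite Hl, Nat.sub_diag. simpl. ring.
Qed.

Lemma grid_sum_extend n (f : R -> R) :
  lsum (map (fun ds => f (grid_sum (S n) ds)) (grid_words (S n)))
  = lsum (map (fun ds => lsum (map (fun j => f (grid_sum n ds + a (S n) * cell_offset j)) (seq 0 M)))
              (grid_words n)).
Proof.
  simpl grid_words. rewrite lsum_flat_map. apply lsum_ext. intros ds Hds.
  destruct (grid_words_spec n ds Hds) as [Hl _]. rewrite map_map.
  apply lsum_ext. intros j _. rewrite grid_sum_step by auto. reflexivity.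
Qed.

Lemma grid_moment2 n : lsum (map (fun ds => grid_sum n ds ^ 2) (grid_words n)) <= INR M ^ n * sq_norm n / 4.
Proof.
  induction n; [unfold grid_sum, sq_norm; simpl; lra |].
  pose proof (grid_sum_extend n (fun s => s ^ 2)) as E. cbv beta in E. rewrite E, sq_norm_S.
  rewrite (lsum_ext _ (fun ds => INR M * grid_sum n ds ^ 2
             + a (S n) ^ 2 * lsum (map (fun j => cell_offset j ^ 2) (seq 0 M))))
    by (intros; apply offset_shift_pow2).
  rewrite lsum_plus, lsum_scal, lsum_const, grid_words_length, pow_INR.
  pose proof (cell_offset_even_moment 1) as Z2. change (2 * 1)%nat with 2%nat in Z2. rewrite pow_1 in Z2. pose proof INR_M_pos.
  assert (0 <= INR M ^ n) by (apply pow_le; lra). pose proof (pow2_ge_0 (a (S n))).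
  apply Rle_trans with (INR M * (INR M ^ n * sq_norm n / 4) + INR M ^ n * (a (S n) ^ 2 * (INR M / 4))).
  - apply Rplus_le_compat; [apply Rmult_le_compat_l; lra |].
    apply Rmult_le_compat_l; auto. apply Rmult_le_compat_l; auto. lra.
  - right. change (INR M ^ S n) with (INR M * INR M ^ n). field.
Qed.

Lemma grid_moment4 n : lsum (map (fun ds => grid_sum n ds ^ 4) (grid_words n)) <= INR M ^ n * sq_norm n ^ 2.
Proof.
  induction n; [unfold grid_sum, sq_norm; simpl; lra |].
  pose proof (grid_sum_extend n (fun s => s ^ 4)) as E. cbv beta in E. rewrite E, sq_norm_S.
  set (b := a (S n)). set (Z2 := lsum (map (fun j => cell_offset j ^ 2) (seq 0 M))).
  rewrite (lsum_ext _ (fun ds => INR M * grid_sum n ds ^ 4 + (6 * b ^ 2 * Z2) * grid_sum n ds ^ 2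
             + b ^ 4 * lsum (map (fun j => cell_offset j ^ 4) (seq 0 M))))
    by (intros; rewrite offset_shift_pow4; unfold Z2; ring).
  rewrite !lsum_plus, !lsum_scal, lsum_const, grid_words_length, pow_INR.
  pose proof (grid_moment2 n) as M2. pose proof (cell_offset_even_moment 1) as HZ2.
  pose proof (cell_offset_even_moment 2) as HZ4. pose proof INR_M_pos. pose proof (sq_norm_ge0 n).
  change (2 * 1)%nat with 2%nat in HZ2. change (2 * 2)%nat with 4%nat in HZ4.
  fold Z2 in HZ2. rewrite pow_1 in HZ2.
  assert (HZ0 : 0 <= Z2) by (apply lsum_ge0; intros; apply pow2_ge_0).
  assert (Hp : 0 <= INR M ^ n) by (apply pow_le; lra).
  assert (Hb2 : 0 <= b ^ 2) by apply pow2_ge_0.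
  set (P := INR M ^ n) in *. set (T := sq_norm n) in *.
  set (L2 := lsum (map (fun ds => grid_sum n ds ^ 2) (grid_words n))) in *.
  set (Z4 := lsum (map (fun j => cell_offset j ^ 4) (seq 0 M))) in *.
  assert (Hb4 : 0 <= b ^ 4) by (replace (b ^ 4) with ((b ^ 2) ^ 2) by ring; apply pow2_ge_0).
  apply Rle_trans with (INR M * (P * T ^ 2) + 6 * b ^ 2 * (INR M / 4) * (P * T / 4) + b ^ 4 * (P * (INR M / 16))).
  - apply Rplus_le_compat; [apply Rplus_le_compat |].
    + apply Rmult_le_compat_l; lra.
    + apply Rmult_le_compat; [apply Rmult_le_pos; [apply Rmult_le_pos |]; lra | apply lsum_ge0; intros; apply pow2_ge_0 | |];
        [apply Rmult_le_compat_l |]; lra.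
    + apply Rmult_le_compat_l, Rmult_le_compat_l; auto. lra.
  - (* the cross terms are dominated by those of [(T + b^2)^2] *)
    assert (0 <= INR M * P * T * b ^ 2) by (apply Rmult_le_pos; [apply Rmult_le_pos; [apply Rmult_le_pos |] |]; lra).
    assert (0 <= INR M * P * b ^ 4) by (apply Rmult_le_pos; [apply Rmult_le_pos |]; lra).
    change (INR M ^ S n) with (INR M * P).
    replace (INR M * P * (T + b ^ 2) ^ 2)
      with (INR M * (P * T ^ 2) + 2 * (INR M * P * T * b ^ 2) + INR M * P * b ^ 4) by ring.
    replace (6 * b ^ 2 * (INR M / 4) * (P * T / 4)) with (3/8 * (INR M * P * T * b ^ 2)) by field.
    replace (b ^ 4 * (P * (INR M / 16))) with (1/16 * (INR M * P * b ^ 4)) by field.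
    lra.
Qed.
End Grid.

(** * Null sets of [Omega] *)

(* The grid cells of [[0,1]^n] on which a linear form [sum_i a_i (x_i - 1/2)]
   is at least [t] at the centre; by Markov's inequality and the fourth
   moment bound, their total volume is at most [(sum_i a_i^2)^2 / t^4]. *)
Section HeavyCells.
Variable M : nat.
Hypothesis HM : (1 <= M)%nat.
Variable a : nat -> R.
Variable n : nat.
Variable t : R.
Hypothesis Ht : 0 < t.

Definition cell_box (ds : list nat) : box :=
  {| bn := n; ba := fun i => INR (nth (i - 1) ds 0%nat) / INR M;
     bb := fun i => (INR (nth (i - 1) ds 0%nat) + 1) / INR M |}.

Definition heavy_cover : list box :=
  map cell_box (filter (fun ds => if Rle_dec t (Rabs (grid_sum M a n ds)) then true else false)
                       (grid_words M n)).

Lemma cell_box_vol ds : box_vol (cell_box ds) = (/ INR M) ^ n.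
Proof.
  unfold box_vol, cell_box; simpl. pose proof (INR_M_pos M HM).
  rewrite (lprod_ext _ (fun _ => / INR M)) by (intros; field; lra).
  rewrite lprod_const, length_seq. auto.
Qed.

Lemma heavy_cover_vol : lsum (map box_vol heavy_cover) <= sq_norm a n ^ 2 / t ^ 4.
Proof.
  unfold heavy_cover. rewrite map_map. pose proof (INR_M_pos M HM) as HMp.
  assert (Hc : 0 < (/ INR M) ^ n) by (apply pow_lt, Rinv_0_lt_compat; auto).
  assert (Ht4 : 0 < t ^ 4) by (apply pow_lt; auto).
  assert (H4 : forall y, y ^ 4 = (y ^ 2) ^ 2) by (intros; ring).
  eapply Rle_trans.
  - apply lsum_filter_le with (f := fun ds => (/ INR M) ^ n / t ^ 4 * grid_sum M a n ds ^ 4).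
    + intros ds _ HP. destruct (Rle_dec t (Rabs (grid_sum M a n ds))) as [Hle |]; [| discriminate].
      rewrite cell_box_vol.
      assert (t ^ 4 <= grid_sum M a n ds ^ 4).
      { replace (grid_sum M a n ds ^ 4) with (Rabs (grid_sum M a n ds) ^ 4)
          by (rewrite !H4, pow2_abs; reflexivity).
        apply pow_incr; lra. }
      apply (Rmult_le_reg_r (t ^ 4)); auto. unfold Rdiv.
      replace ((/ INR M) ^ n * / t ^ 4 * grid_sum M a n ds ^ 4 * t ^ 4)
        with ((/ INR M) ^ n * grid_sum M a n ds ^ 4) by (field; lra).
      apply Rmult_le_compat_l; lra.
    + intros ds _. apply Rmult_le_pos; [apply Rlt_le, Rdiv_lt_0_compat; auto |].
      rewrite H4. apply pow2_ge_0.
  - rewrite lsum_scal. pose proof (grid_moment4 M HM a n).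
    apply Rle_trans with ((/ INR M) ^ n / t ^ 4 * (INR M ^ n * sq_norm a n ^ 2)).
    + apply Rmult_le_compat_l; auto. apply Rlt_le, Rdiv_lt_0_compat; auto.
    + right. rewrite pow_inv. field. split; [lra |]. apply pow_nonzero; lra.
Qed.

Lemma heavy_cover_ok B : In B heavy_cover -> box_ok B.
Proof.
  unfold heavy_cover. intros H. apply in_map_iff in H. destruct H as [ds [<- H]].
  apply filter_In in H. destruct H as [H _]. destruct (grid_words_spec M HM n ds H) as [Hl Hd].
  intros i Hi. simpl in Hi |- *. pose proof (INR_M_pos M HM).
  assert (Hlt : (nth (i - 1) ds 0 < M)%nat) by (apply Hd, nth_In; lia).
  assert (INR (nth (i - 1) ds 0%nat) + 1 <= INR M) by (rewrite <- S_INR; apply le_INR; lia).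
  pose proof (pos_INR (nth (i - 1) ds 0%nat)).
  split; [| split].
  - apply Rmult_le_pos; auto. left; apply Rinv_0_lt_compat; auto.
  - unfold Rdiv. apply Rmult_le_compat_r; [left; apply Rinv_0_lt_compat; auto | lra].
  - apply (Rmult_le_reg_r (INR M)); auto. unfold Rdiv. rewrite Rmult_assoc, Rinv_l; lra.
Qed.

Lemma grid_interval_exists y : 0 <= y <= 1 ->
  exists j, (j < M)%nat /\ INR j / INR M <= y <= (INR j + 1) / INR M.
Proof.
  intros Hy. pose proof (INR_M_pos M HM).
  assert (G : forall k, (1 <= k <= M)%nat -> y <= INR k / INR M ->
              exists j, (j < k)%nat /\ INR j / INR M <= y <= (INR j + 1) / INR M).
  { induction k; intros Hk Hyk; [lia |].
    destruct (Rle_dec y (INR k / INR M)) as [Hle | Hgt].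
    - destruct (Nat.eq_dec k 0) as [-> | Hk0].
      + exists 0%nat. split; [lia |]. simpl in *. unfold Rdiv in *. rewrite Rmult_0_l in *. lra.
      + destruct (IHk ltac:(lia) Hle) as [j [Hj1 Hj2]]. exists j. split; auto; lia.
    - exists k. split; [lia |]. rewrite S_INR in Hyk. lra. }
  destruct (G M ltac:(lia)) as [j Hj]; [unfold Rdiv; rewrite Rinv_r; lra |]. exists j; auto.
Qed.

Lemma grid_word_exists (P : nat -> nat -> Prop) :
  (forall i, (1 <= i)%nat -> exists j, (j < M)%nat /\ P i j) ->
  forall m, exists ds, In ds (grid_words M m) /\ forall i, (1 <= i <= m)%nat -> P i (nth (i - 1) ds 0%nat).
Proof.
  intros HP. induction m.
  - exists []. split; [simpl; auto | intros; lia].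
  - destruct IHm as [ds [Hds HPd]]. destruct (HP (S m) ltac:(lia)) as [j [Hj HPj]].
    destruct (grid_words_spec M HM m ds Hds) as [Hl _].
    exists (ds ++ [j]). split.
    + simpl. apply in_flat_map. exists ds. split; auto. apply in_map_iff. exists j. split; auto. apply in_seq; lia.
    + intros i Hi. destruct (Nat.eq_dec i (S m)) as [-> | Hne].
      * rewrite app_nth2 by lia. rewrite Hl. replace (S m - 1 - m)%nat with 0%nat by lia. simpl. auto.
      * rewrite app_nth1 by lia. apply HPd. lia.
Qed.

Lemma heavy_cover_covers x : in_Omega x ->
  lsum (map (fun i => Rabs (a i)) (seq 1 n)) <= t * INR M ->
  2 * t < Rabs (lsum (map (fun i => a i * (x i - 1/2)) (seq 1 n))) ->
  exists B, In B heavy_cover /\ in_box B x.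
Proof.
  intros Hx Ha Hbig. pose proof (INR_M_pos M HM) as HMp.
  destruct (grid_word_exists (fun i j => INR j / INR M <= x i <= (INR j + 1) / INR M)
             (fun i Hi => grid_interval_exists (x i) (Hx i Hi)) n) as [ds [Hds Hin]].
  assert (Hclose : Rabs (lsum (map (fun i => a i * (x i - 1/2)) (seq 1 n)) - grid_sum M a n ds) <= t).
  { unfold grid_sum. rewrite lsum_minus.
    eapply Rle_trans; [apply lsum_abs |].
    apply Rle_trans with (lsum (map (fun i => / INR M * Rabs (a i)) (seq 1 n))).
    - apply lsum_le. intros i Hi. apply in_seq in Hi. specialize (Hin i ltac:(lia)).
      replace (a i * (x i - 1 / 2) - a i * (cell_center M ds i - 1 / 2))
        with (a i * (x i - cell_center M ds i)) by ring.
      rewrite Rabs_mult, Rmult_comm. apply Rmult_le_compat_r; [apply Rabs_pos |].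
      unfold cell_center. apply Rabs_le. unfold Rdiv in *.
      rewrite Rmult_plus_distr_r in Hin |- *. split; nra.
    - rewrite lsum_scal. apply (Rmult_le_reg_l (INR M)); auto.
      rewrite <- Rmult_assoc, Rinv_r, Rmult_1_l by lra. lra. }
  exists (cell_box ds). split.
  - unfold heavy_cover. apply in_map. apply filter_In. split; auto.
    destruct (Rle_dec t (Rabs (grid_sum M a n ds))) as [| Hn]; auto. exfalso.
    pose proof (Rabs_triang_inv (lsum (map (fun i => a i * (x i - 1 / 2)) (seq 1 n))) (grid_sum M a n ds)).
    lra.
  - intros i Hi. apply Hin. simpl in Hi. lia.
Qed.
End HeavyCells.

Definition empty_box : box := {| bn := 1; ba := fun _ => 0; bb := fun _ => 0 |}.

Lemma box_vol_ge0 B : box_ok B -> 0 <= box_vol B.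
Proof.
  intros H. unfold box_vol. assert (forall l, (forall i, In i l -> (1 <= i <= bn B)%nat) ->
    0 <= lprod (map (fun i => bb B i - ba B i) l)).
  { induction l; simpl; intros Hl; [lra |]. apply Rmult_le_pos.
    - destruct (H a (Hl a (or_introl eq_refl))) as [_ [? _]]. lra.
    - apply IHl. auto. }
  apply H0. intros i Hi. apply in_seq in Hi. lia.
Qed.

Lemma enumerate_boxes (L : nat -> list box) :
  (forall u B, In B (L u) -> box_ok B) ->
  exists C : nat -> box,
    (forall k, box_ok (C k)) /\
    (forall u B, In B (L u) -> exists k, C k = B) /\
    (forall m, lsum (map (fun k => box_vol (C k)) (seq 0 m))
               <= lsum (map (fun u => lsum (map box_vol (L u))) (seq 0 m))).
Proof.
  intros HL.
  assert (Hempty : box_ok empty_box) by (intros i _; simpl; lra).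
  assert (Hnth : forall u j, box_ok (nth j (L u) empty_box)).
  { intros u j. destruct (nth_in_or_default j (L u) empty_box) as [Hi | ->]; eauto. }
  exists (fun k => let '(u, j) := Cantor.of_nat k in nth j (L u) empty_box). split; [| split].
  - intros k. destruct (Cantor.of_nat k) as [u j]. apply Hnth.
  - intros u B HB. destruct (In_nth _ _ empty_box HB) as [j [_ Hj]].
    exists (Cantor.to_nat (u, j)). rewrite Cantor.cancel_of_to. exact Hj.
  - intros m. set (f := fun pr : nat * nat => box_vol (nth (snd pr) (L (fst pr)) empty_box)).
    rewrite (lsum_ext _ (fun k => f (Cantor.of_nat k)))
      by (intros k _; unfold f; destruct (Cantor.of_nat k); reflexivity).
    rewrite <- (map_map Cantor.of_nat f).
    eapply Rle_trans.
    { apply lsum_incl with (l2 := list_prod (seq 0 m) (seq 0 m)).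
      - apply Injective_map_NoDup; [| apply seq_NoDup].
        intros k1 k2 Hk. rewrite <- (Cantor.cancel_to_of k1), <- (Cantor.cancel_to_of k2), Hk. auto.
      - intros pr Hpr. apply in_map_iff in Hpr. destruct Hpr as [k [Hk Hkm]]. apply in_seq in Hkm.
        destruct pr as [u j]. pose proof (Cantor.to_nat_non_decreasing u j) as Hnd.
        rewrite <- Hk, Cantor.cancel_to_of in Hnd. apply in_prod; apply in_seq; lia.
      - intros [u j] _. apply box_vol_ge0, Hnth. }
    rewrite lsum_list_prod. apply lsum_le. intros u _. unfold f; simpl.
    apply lsum_nth_le; [unfold box_vol; simpl; ring |].
    intros B HB. apply box_vol_ge0, (HL u), HB.
Qed.

Lemma Omega_null_mono (N1 N2 : (nat -> R) -> Prop) :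
  Omega_null N1 -> (forall x, in_Omega x -> N2 x -> N1 x) -> Omega_null N2.
Proof.
  intros H Himp eps He. destruct (H eps He) as [C [H1 [H2 H3]]]. exists C. split; auto.
Qed.

Lemma Omega_null_union (N1 N2 : (nat -> R) -> Prop) :
  Omega_null N1 -> Omega_null N2 -> Omega_null (fun x => N1 x \/ N2 x).
Proof.
  intros H1 H2 eps He.
  destruct (H1 (eps / 2) ltac:(lra)) as [C1 [Hok1 [Hcov1 Hvol1]]].
  destruct (H2 (eps / 2) ltac:(lra)) as [C2 [Hok2 [Hcov2 Hvol2]]].
  destruct (enumerate_boxes (fun u => [C1 u; C2 u])) as [C [Hok [Hall Hvol]]].
  { intros u B [<- | [<- | []]]; auto. }
  exists C. split; [| split]; auto.
  - intros x Hx [HN | HN].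
    + destruct (Hcov1 x Hx HN) as [u Hu]. destruct (Hall u (C1 u) (or_introl eq_refl)) as [k Hk].
      exists k. rewrite Hk. exact Hu.
    + destruct (Hcov2 x Hx HN) as [u Hu]. destruct (Hall u (C2 u) (or_intror (or_introl eq_refl))) as [k Hk].
      exists k. rewrite Hk. exact Hu.
  - intros m. eapply Rle_trans; [apply Hvol |].
    rewrite (lsum_ext _ (fun u => box_vol (C1 u) + box_vol (C2 u))) by (intros; simpl; ring).
    rewrite lsum_plus. specialize (Hvol1 m). specialize (Hvol2 m). lra.
Qed.

(* Tails of [sum_s s^{-3/2}], by comparison with the telescoping [2 / sqrt (s-1) - 2 / sqrt s]. *)
Lemma inv_pow32_le s : (2 <= s)%nat ->
  / (INR s * sqrt (INR s)) <= 2 * (/ sqrt (INR s - 1) - / sqrt (INR s)).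
Proof.
  intros Hs. assert (H2 : 2 <= INR s) by (replace 2 with (INR 2) by (simpl; lra); apply le_INR; auto).
  set (u := sqrt (INR s - 1)). set (v := sqrt (INR s)).
  assert (Hu : 0 < u) by (apply sqrt_lt_R0; lra). assert (Hv : 0 < v) by (apply sqrt_lt_R0; lra).
  assert (Hu2 : u * u = INR s - 1) by (apply sqrt_sqrt; lra).
  assert (Hv2 : v * v = INR s) by (apply sqrt_sqrt; lra).
  assert (Huv : u <= v) by (apply sqrt_le_1_alt; lra).
  assert (Hd : (v - u) * (v + u) = 1) by nra.
  assert (Hk : u <= (v - u) * (2 * (v * v))).
  { replace u with ((v - u) * (v + u) * u) at 1 by (rewrite Hd; ring).
    assert (0 <= v - u) by lra. assert (u * (v + u) <= 2 * (v * v)) by nra. nra. }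
  rewrite <- Hv2. apply (Rmult_le_reg_r (v * v * v * u)); [repeat apply Rmult_lt_0_compat; auto |].
  replace (/ (v * v * v) * (v * v * v * u)) with u by (field; lra).
  replace (2 * (/ u - / v) * (v * v * v * u)) with ((v - u) * (2 * (v * v))) by (field; lra).
  auto.
Qed.

Lemma sum_inv_pow32_le R0 m : (2 <= R0)%nat ->
  lsum (map (fun u => / (INR (R0 + u) * sqrt (INR (R0 + u)))) (seq 0 m)) <= 2 / sqrt (INR R0 - 1).
Proof.
  intros HR. apply Rle_trans with (2 * (/ sqrt (INR R0 - 1) - / sqrt (INR (R0 + m) - 1))).
  - induction m.
    + simpl. rewrite Nat.add_0_r. lra.
    + rewrite seq_S, map_app, lsum_app. simpl.
      pose proof (inv_pow32_le (R0 + m) ltac:(lia)).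
      replace (INR (R0 + S m) - 1) with (INR (R0 + m)) by (rewrite Nat.add_succ_r, S_INR; ring).
      replace (0 + m)%nat with m by lia. lra.
  - assert (0 < INR (R0 + m) - 1).
    { rewrite plus_INR. pose proof (pos_INR m). assert (INR 2 <= INR R0) by (apply le_INR; auto). simpl in *. lra. }
    assert (0 < / sqrt (INR (R0 + m) - 1)) by (apply Rinv_0_lt_compat, sqrt_lt_R0; auto).
    unfold Rdiv. lra.
Qed.

(* The threshold [s^{-1/8}]: it tends to 0 while [sum_s s^{-2} / thr s^4] converges. *)
Definition thr (s : nat) : R := / sqrt (sqrt (sqrt (INR s))).

Lemma thr_cv : Un_cv thr 0.
Proof. unfold thr. do 2 apply Un_cv_inv_sqrt_comp. apply Un_cv_inv_sqrt. Qed.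

Lemma thr_pos s : (1 <= s)%nat -> 0 < thr s.
Proof. intros. unfold thr. apply Rinv_0_lt_compat, sqrt_lt_R0, sqrt_lt_R0, sqrt_lt_R0, lt_0_INR; lia. Qed.

Lemma thr_pow4 s : (1 <= s)%nat -> thr s ^ 4 = / sqrt (INR s).
Proof.
  intros Hs. unfold thr. assert (0 < INR s) by (apply lt_0_INR; lia).
  assert (0 < sqrt (INR s)) by (apply sqrt_lt_R0; auto).
  assert (0 < sqrt (sqrt (INR s))) by (apply sqrt_lt_R0; auto).
  rewrite pow_inv. f_equal.
  replace 4%nat with (2 * 2)%nat by reflexivity. rewrite pow_mult. simpl. rewrite !Rmult_1_r.
  rewrite !sqrt_sqrt by lra. reflexivity.
Qed.

(* Strong law of large numbers for weighted sums of the uniform coordinates: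
   if [|A s i| <= c/s], then for almost every [x] the centred sums
   [sum_{i <= s} A s i (x_i - 1/2)] tend to 0.  For each [s] the exceptional
   set [|sum| > 2 thr s] is covered by heavy cells of total volume
   [O(s^{-3/2})], a summable bound (Borel-Cantelli). *)
Definition fluct (A : nat -> nat -> R) (x : nat -> R) (s : nat) : R :=
  lsum (map (fun i => A s i * (x i - 1/2)) (seq 1 s)).

Section Fluctuations.
Variable A : nat -> nat -> R.
Variable c : R.
Variable R0 : nat.
Hypothesis Hc : 0 < c.
Hypothesis HA : forall s i, (R0 <= s)%nat -> (1 <= i <= s)%nat -> Rabs (A s i) <= c / INR s.

(* A mesh fine enough for [heavy_cover_covers] at threshold [thr s]. *)
Definition mesh (s : nat) : nat := S (Z.to_nat (up (c / thr s))).
Definition heavy (s : nat) : list box := heavy_cover (mesh s) (A s) s (thr s).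

Lemma heavy_ok s B : In B (heavy s) -> box_ok B.
Proof. intros H. eapply heavy_cover_ok; [| exact H]. unfold mesh; lia. Qed.

Lemma heavy_vol s : (max R0 1 <= s)%nat ->
  lsum (map box_vol (heavy s)) <= c ^ 4 * / (INR s * sqrt (INR s)).
Proof.
  intros Hs. unfold heavy. eapply Rle_trans; [apply heavy_cover_vol; [unfold mesh; lia | apply thr_pos; lia] |].
  assert (Hs0 : 0 < INR s) by (apply lt_0_INR; lia).
  assert (Hsq : 0 < sqrt (INR s)) by (apply sqrt_lt_R0; auto).
  assert (HT : sq_norm (A s) s <= c ^ 2 / INR s).
  { unfold sq_norm. eapply Rle_trans; [apply lsum_le with (g := fun _ => (c / INR s) ^ 2) |].
    - intros i Hi. apply in_seq in Hi. rewrite <- pow2_abs. apply pow_incr. split; [apply Rabs_pos |]. apply HA; lia.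
    - rewrite lsum_const, length_seq. right. field. lra. }
  pose proof (sq_norm_ge0 (A s) s).
  rewrite thr_pow4 by lia.
  apply Rle_trans with ((c ^ 2 / INR s) ^ 2 / / sqrt (INR s)).
  - unfold Rdiv. apply Rmult_le_compat_r; [left; apply Rinv_0_lt_compat, Rinv_0_lt_compat; auto |].
    apply pow_incr; lra.
  - right. assert (Hq : sqrt (INR s) * sqrt (INR s) = INR s) by (apply sqrt_sqrt; lra).
    set (q := sqrt (INR s)) in *. rewrite <- Hq. field. lra.
Qed.

Lemma heavy_covers s x : (max R0 1 <= s)%nat -> in_Omega x -> 2 * thr s < Rabs (fluct A x s) ->
  exists B, In B (heavy s) /\ in_box B x.
Proof.
  intros Hs Hx Hbig. unfold heavy. apply heavy_cover_covers; auto; [unfold mesh; lia |].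
  assert (Hs0 : 0 < INR s) by (apply lt_0_INR; lia).
  apply Rle_trans with (INR (length (seq 1 s)) * (c / INR s)).
  - rewrite <- lsum_const. apply lsum_le. intros i Hi. apply in_seq in Hi. apply HA; lia.
  - rewrite length_seq. pose proof (thr_pos s ltac:(lia)).
    replace (INR s * (c / INR s)) with c by (field; lra).
    unfold mesh. rewrite S_INR. pose proof (nat_up (c / thr s)).
    apply Rle_trans with (thr s * (c / thr s)); [right; field; lra |].
    apply Rmult_le_compat_l; lra.
Qed.

Lemma fluctuation_null : Omega_null (fun x => ~ Un_cv (fluct A x) 0).
Proof.
  intros eps Heps.
  destruct (nat_arch ((2 * c ^ 4 / eps) ^ 2)) as [N HN].
  set (R := (max R0 N + 2)%nat).
  destruct (enumerate_boxes (fun u => heavy (R + u))) as [C [Hok [Hall Hvol]]].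
  { intros u B. apply heavy_ok. }
  exists C. split; [| split]; auto.
  - intros x Hx Hbad.
    assert (Hex : exists s, (R <= s)%nat /\ 2 * thr s < Rabs (fluct A x s)).
    { apply NNPP. intros Hno. apply Hbad. apply Un_cv_squeeze0 with (v := fun s => 2 * thr s).
      - exists R. intros s Hs. apply Rnot_lt_le. intros Hlt. apply Hno. exists s. auto.
      - replace 0 with (2 * 0) by ring. apply Un_cv_scal, thr_cv. }
    destruct Hex as [s [Hs Hbig]].
    destruct (heavy_covers s x ltac:(unfold R in *; lia) Hx Hbig) as [B [HB HBx]].
    replace s with (R + (s - R))%nat in HB by lia.
    destruct (Hall _ _ HB) as [k Hk]. exists k. rewrite Hk. exact HBx.
  - intros m. eapply Rle_trans; [apply Hvol |].
    eapply Rle_trans; [apply lsum_le with (g := fun u => c ^ 4 * / (INR (R + u) * sqrt (INR (R + u)))) |].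
    { intros u _. apply heavy_vol. unfold R; lia. }
    rewrite lsum_scal.
    assert (Hc4 : 0 < c ^ 4) by (apply pow_lt; auto).
    eapply Rle_trans; [apply Rmult_le_compat_l; [lra | apply sum_inv_pow32_le; unfold R; lia] |].
    assert (HR1 : INR N + 1 <= INR R - 1).
    { unfold R. rewrite plus_INR. simpl. assert (INR N <= INR (max R0 N)) by (apply le_INR; lia). lra. }
    assert (H0 : 0 <= 2 * c ^ 4 / eps) by (apply Rlt_le, Rdiv_lt_0_compat; lra).
    assert (Hsq : 2 * c ^ 4 / eps < sqrt (INR R - 1)).
    { rewrite <- (sqrt_pow2 (2 * c ^ 4 / eps)) by auto. apply sqrt_lt_1_alt. split; [apply pow2_ge_0 | lra]. }
    apply (Rmult_lt_compat_l eps) in Hsq; auto.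
    replace (eps * (2 * c ^ 4 / eps)) with (2 * c ^ 4) in Hsq by (field; lra).
    assert (Hq1 : 0 < sqrt (INR R - 1)) by (pose proof (pos_INR N); apply sqrt_lt_R0; lra).
    apply (Rmult_le_reg_r (sqrt (INR R - 1))); auto.
    replace (c ^ 4 * (2 / sqrt (INR R - 1)) * sqrt (INR R - 1)) with (2 * c ^ 4) by (field; lra). lra.
Qed.
End Fluctuations.

(** * Total weights of the two rows *)

Lemma smooth_continuous h : smooth h -> forall t, continuity_pt h t.
Proof.
  intros [f [H0 H1]] t.
  assert (Hf : continuity_pt (f 0%nat) t) by (apply derivable_continuous_pt; exists (f 1%nat t); apply H1).
  intros eps He. destruct (Hf eps He) as [d [Hd Hfd]]. exists d. split; auto.
  intros x Hx. rewrite <- !H0. apply Hfd; auto.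
Qed.

Lemma positive_interval h lo : smooth h -> (forall t, 0 <= t <= 1 -> 0 <= h t <= 1) ->
  0 <= lo -> lo + 1/2 <= 1 ->
  (exists t, lo <= t <= lo + 1/2 /\ h t <> 0) ->
  exists al be ga, lo < al < be /\ be < lo + 1/2 /\ 0 < ga /\ forall t, al <= t <= be -> ga <= h t.
Proof.
  intros Hs Hr Hlo Hhi [t0 [Ht0 Hnz]].
  assert (Hpos : 0 < h t0) by (destruct (Hr t0 ltac:(lra)); lra).
  destruct (smooth_continuous h Hs t0 (h t0 / 2) ltac:(lra)) as [d [Hd Hf]].
  set (e := Rmin d (1/8)).
  assert (0 < e) by (unfold e; apply Rmin_glb_lt; lra).
  assert (e <= d) by apply Rmin_l. assert (e <= 1/8) by apply Rmin_r.
  assert (Hnear : forall t, t0 - e < t < t0 + e -> h t0 / 2 <= h t).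
  { intros t Ht. destruct (Req_dec t t0) as [-> | Hne]; [lra |].
    assert (Hd' : D_x no_cond t0 t /\ R_dist t t0 < d).
    { split; [split; [exact I | apply not_eq_sym; auto] |]. unfold R_dist. apply Rabs_def1; lra. }
    specialize (Hf t Hd'). unfold R_dist in Hf. apply Rabs_def2 in Hf. lra. }
  destruct (Rle_dec t0 (lo + 1/4)).
  - exists (t0 + e / 4), (t0 + e / 2), (h t0 / 2). repeat split; try lra. intros t Ht. apply Hnear. lra.
  - exists (t0 - e / 2), (t0 - e / 4), (h t0 / 2). repeat split; try lra. intros t Ht. apply Hnear. lra.
Qed.

Lemma nat_ceil x : 0 <= x -> exists a : nat, x < INR a <= x + 1.
Proof.
  intros Hx. destruct (archimed x) as [H1 H2]. exists (Z.to_nat (up x)).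
  assert (0 < up x)%Z by (apply lt_IZR; lra).
  rewrite INR_IZR_INZ, Z2Nat.id by lia. lra.
Qed.

Lemma nat_floor x : 0 <= x -> exists b : nat, INR b <= x < INR b + 1.
Proof.
  intros Hx. destruct (nat_ceil x Hx) as [a [H1 H2]].
  destruct a; [simpl in H1; lra |].
  destruct (Rle_dec (INR a + 1) x); [exists (S a) | exists a]; rewrite S_INR in *; lra.
Qed.

Lemma mass_lower (h : R -> R) (w : nat -> R) r al be ga ka :
  0 < al -> al < be -> be <= 1 -> 0 < ga -> 0 <= ka -> (1 <= r)%nat -> 2 <= (be - al) * INR r ->
  (forall t, al <= t <= be -> ga <= h t) ->
  (forall i, (1 <= i <= r)%nat -> 0 <= h (INR i / INR r) * w i) ->
  (forall i, al * INR r <= INR i <= be * INR r -> ka <= w i) ->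
  ga * ka * (be - al) * INR r / 2 <= mass h r w.
Proof.
  intros Hal Hab Hbe Hga Hka Hr Hlong Hh Hpos Hw.
  assert (Hr0 : 0 < INR r) by (apply lt_0_INR; lia).
  destruct (nat_ceil (al * INR r) ltac:(nra)) as [a [Ha1 Ha2]].
  destruct (nat_floor (be * INR r) ltac:(nra)) as [b [Hb1 Hb2]].
  assert (Ha : (1 <= a)%nat) by (destruct a; [simpl in Ha1; nra | lia]).
  assert (Hbr : (b <= r)%nat) by (apply INR_le; nra).
  assert (Hk : INR b + 1 - INR a <= INR (S b - a)).
  { destruct (le_lt_dec a (S b)).
    - rewrite minus_INR, S_INR by auto. lra.
    - assert (Hsb : INR (S b) < INR a) by (apply lt_INR; auto). rewrite S_INR in Hsb.
      pose proof (pos_INR (S b - a)). lra. }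
  assert (Hsub : lsum (map (fun i => h (INR i / INR r) * w i * 1) (seq a (S b - a))) <= mass h r w).
  { apply lsum_incl; [apply seq_NoDup | |].
    - intros i Hi. apply in_seq in Hi. apply in_seq. lia.
    - intros i Hi. apply in_seq in Hi. rewrite Rmult_1_r. apply Hpos. lia. }
  eapply Rle_trans; [| exact Hsub].
  apply Rle_trans with (INR (length (seq a (S b - a))) * (ga * ka)).
  - rewrite length_seq. assert (0 <= ga * ka) by nra. nra.
  - rewrite <- lsum_const. apply lsum_le. intros i Hi. apply in_seq in Hi.
    assert (HiR1 : INR a <= INR i) by (apply le_INR; lia).
    assert (HiR2 : INR i <= INR b) by (apply le_INR; lia).
    assert (Hwi := Hw i ltac:(split; lra)).
    assert (Hhi : ga <= h (INR i / INR r)).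
    { apply Hh. split; apply (Rmult_le_reg_r (INR r)); auto; unfold Rdiv;
        rewrite Rmult_assoc, Rinv_l; lra. }
    rewrite Rmult_1_r. apply Rmult_le_compat; lra.
Qed.

Lemma INR_sub_max x y : INR (x - y) = Rmax (INR x - INR y) 0.
Proof.
  destruct (le_lt_dec x y).
  - replace (x - y)%nat with 0%nat by lia. assert (INR x <= INR y) by (apply le_INR; auto).
    rewrite Rmax_right by lra. reflexivity.
  - rewrite minus_INR by lia. assert (INR y < INR x) by (apply lt_INR; auto). rewrite Rmax_left; lra.
Qed.

Lemma Rmax0_lip u v : Rabs (Rmax u 0 - Rmax v 0) <= Rabs (u - v).
Proof.
  pose proof (Rle_abs (u - v)). pose proof (Rle_abs (- (u - v))). rewrite Rabs_Ropp in H0.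
  apply Rabs_le. destruct (Rle_dec u 0); destruct (Rle_dec v 0);
    repeat first [rewrite Rmax_right by lra | rewrite Rmax_left by lra]; lra.
Qed.

Lemma weight1_lip q q' i : Rabs (weight1 q i - weight1 q' i) <= Rabs (INR q - INR q').
Proof.
  unfold weight1. rewrite !INR_sub_max. eapply Rle_trans; [apply Rmax0_lip |].
  rewrite !S_INR, <- Rabs_Ropp. right. f_equal. ring.
Qed.

Lemma weight2_lip q q' i : Rabs (weight2 q i - weight2 q' i) <= Rabs (INR q - INR q').
Proof.
  unfold weight2. rewrite !INR_sub_max. eapply Rle_trans; [apply Rmax0_lip |].
  rewrite !S_INR. right. f_equal. ring.
Qed.

Lemma INR_sub_ge x y : INR x - INR y <= INR (x - y).
Proof. rewrite INR_sub_max. apply Rmax_l. Qed.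

Definition central (q : nat -> nat) : Prop :=
  forall eps, 0 < eps -> exists N, forall r, (N <= r)%nat -> Rabs (2 * INR (q r) - INR r) <= eps * INR r.

Lemma mid_central : central mid.
Proof.
  intros eps He. destruct (nat_arch (/ eps)) as [N HN]. exists (S N). intros r Hr.
  pose proof (mid_bounds_R r).
  assert (INR N < INR r) by (apply lt_INR; lia).
  assert (1 <= eps * INR r).
  { apply (Rmult_le_reg_l (/ eps)); [apply Rinv_0_lt_compat; auto |].
    rewrite <- Rmult_assoc, Rinv_l, Rmult_1_l, Rmult_1_r by lra. lra. }
  apply Rabs_le. lra.
Qed.

Section Masses.
Variable h : R -> R.
Hypothesis h_smooth : smooth h.
Hypothesis h_range : forall t, 0 <= t <= 1 -> 0 <= h t <= 1.

Lemma h_at r i : (1 <= i <= r)%nat -> 0 <= h (INR i / INR r) <= 1.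
Proof.
  intros H. apply h_range. assert (0 < INR r) by (apply lt_0_INR; lia).
  assert (INR i <= INR r) by (apply le_INR; lia). pose proof (pos_INR i). split.
  - apply Rmult_le_pos; [lra | left; apply Rinv_0_lt_compat; lra].
  - apply (Rmult_le_reg_r (INR r)); auto. unfold Rdiv. rewrite Rmult_assoc, Rinv_l; lra.
Qed.

Lemma mass_lipschitz r (w v : nat -> R) d :
  (forall i, Rabs (w i - v i) <= d) -> Rabs (mass h r w - mass h r v) <= INR r * d.
Proof.
  intros Hd. unfold mass, wsum. rewrite lsum_minus. eapply Rle_trans; [apply lsum_abs |].
  replace (INR r * d) with (INR (length (seq 1 r)) * d) by (rewrite length_seq; auto).
  rewrite <- lsum_const. apply lsum_le. intros i Hi. apply in_seq in Hi.
  replace (h (INR i / INR r) * w i * 1 - h (INR i / INR r) * v i * 1)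
    with (h (INR i / INR r) * (w i - v i)) by ring.
  rewrite Rabs_mult. destruct (h_at r i ltac:(lia)).
  rewrite (Rabs_pos_eq (h _)) by lra.
  specialize (Hd i). pose proof (Rabs_pos (w i - v i)). nra.
Qed.

(* Along a central sequence the weight of row 1 lives on the right half and
   grows like [r^2], provided [h] does not vanish on [[1/2, 1]]. *)
Lemma mass1_lower (q : nat -> nat) : (exists t, 1/2 <= t <= 1 /\ h t <> 0) -> central q ->
  exists del N, 0 < del /\ forall r, (N <= r)%nat -> del * INR r ^ 2 <= mass h r (weight1 (q r)).
Proof.
  intros Hnz Hq.
  destruct (positive_interval h (1/2) h_smooth h_range ltac:(lra) ltac:(lra)
     ltac:(destruct Hnz as [t Ht]; exists t; replace (1/2 + 1/2) with 1 by lra; auto))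
     as [al [be [ga [Hab [Hbe [Hga Hh]]]]]].
  set (th := (1/2 + al) / 2).
  destruct (Hq ((al - 1/2) / 2) ltac:(lra)) as [N1 HN1].
  destruct (eventually_ge (4 / (al - 1/2) + 2 / (be - al) + 1)) as [N2 HN2].
  exists (ga * (al - th) * (be - al) / 2), (N1 + N2)%nat. split.
  - unfold th. apply Rmult_lt_0_compat; [| lra]. apply Rmult_lt_0_compat; [apply Rmult_lt_0_compat |]; lra.
  - intros r Hr. specialize (HN2 r ltac:(lia)). specialize (HN1 r ltac:(lia)).
    assert (0 < 4 / (al - 1/2)) by (apply Rdiv_lt_0_compat; lra).
    assert (0 < 2 / (be - al)) by (apply Rdiv_lt_0_compat; lra).
    assert (Hr1 : (1 <= r)%nat) by (apply INR_le; simpl; lra).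
    assert (Hc' := Rle_abs (2 * INR (q r) - INR r)).
    assert (H4 : 4 <= (al - 1/2) * INR r).
    { replace 4 with ((al - 1/2) * (4 / (al - 1/2))) by (field; lra). apply Rmult_le_compat_l; lra. }
    assert (Hbr : 2 <= (be - al) * INR r).
    { replace 2 with ((be - al) * (2 / (be - al))) at 1 by (field; lra). apply Rmult_le_compat_l; lra. }
    assert (Hq1 : INR (q r) + 1 <= th * INR r) by (unfold th; lra).
    replace (ga * (al - th) * (be - al) / 2 * INR r ^ 2)
      with (ga * ((al - th) * INR r) * (be - al) * INR r / 2) by (simpl; field).
    apply mass_lower; auto; try lra.
    + unfold th; nra.
    + intros i Hi. destruct (h_at r i Hi). apply Rmult_le_pos; auto. apply pos_INR.
    + intros i Hi. unfold weight1. eapply Rle_trans; [| apply INR_sub_ge]. rewrite S_INR. unfold th in *. lra.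
Qed.

(* Symmetrically, the weight of row 2 lives on the left half. *)
Lemma mass2_lower (q : nat -> nat) : (exists t, 0 <= t <= 1/2 /\ h t <> 0) -> central q ->
  exists del N, 0 < del /\ forall r, (N <= r)%nat -> del * INR r ^ 2 <= mass h r (weight2 (q r)).
Proof.
  intros Hnz Hq.
  destruct (positive_interval h 0 h_smooth h_range ltac:(lra) ltac:(lra)
     ltac:(destruct Hnz as [t Ht]; exists t; replace (0 + 1/2) with (1/2) by lra; auto))
     as [al [be [ga [Hab [Hbe [Hga Hh]]]]]].
  set (th := (1/2 + be) / 2).
  destruct (Hq ((1/2 - be) / 2) ltac:(lra)) as [N1 HN1].
  destruct (eventually_ge (2 / (be - al) + 1)) as [N2 HN2].
  exists (ga * (th - be) * (be - al) / 2), (N1 + N2)%nat. split.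
  - unfold th. apply Rmult_lt_0_compat; [| lra]. apply Rmult_lt_0_compat; [apply Rmult_lt_0_compat |]; lra.
  - intros r Hr. specialize (HN2 r ltac:(lia)). specialize (HN1 r ltac:(lia)).
    assert (0 < 2 / (be - al)) by (apply Rdiv_lt_0_compat; lra).
    assert (Hr1 : (1 <= r)%nat) by (apply INR_le; simpl; lra).
    assert (Hc' := Rle_abs (- (2 * INR (q r) - INR r))). rewrite Rabs_Ropp in Hc'.
    assert (0 <= (1/2 - be) * INR r) by (apply Rmult_le_pos; lra).
    assert (Hbr : 2 <= (be - al) * INR r).
    { replace 2 with ((be - al) * (2 / (be - al))) at 1 by (field; lra). apply Rmult_le_compat_l; lra. }
    assert (Hq1 : th * INR r <= INR (q r)) by (unfold th; lra).
    replace (ga * (th - be) * (be - al) / 2 * INR r ^ 2)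
      with (ga * ((th - be) * INR r) * (be - al) * INR r / 2) by (simpl; field).
    apply mass_lower; auto; try lra.
    + unfold th; nra.
    + intros i Hi. destruct (h_at r i Hi). apply Rmult_le_pos; auto. apply pos_INR.
    + intros i Hi. unfold weight2. eapply Rle_trans; [| apply INR_sub_ge]. rewrite !S_INR. unfold th in *. lra.
Qed.
End Masses.

(** * Normalisation of the two rows *)

Definition normalizer1 (h : R -> R) (r : nat) : R :=
  2 * INR (r - 1 - mid r) / (binomR (r - 2) (mid r) * mass h r (weight1 (mid r))).
Definition normalizer2 (h : R -> R) (r : nat) : R :=
  2 * INR (S (mid r)) / (binomR (r - 2) (mid r) * mass h r (weight2 (mid r))).

(* Normalised coefficients of a weight family [w r]: the linear form
   [wsum h r (w r) x] is [mass / 2 * (1 + fluct (coef h w) x r)]. *)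
Definition coef (h : R -> R) (w : nat -> nat -> R) (r i : nat) : R :=
  2 * h (INR i / INR r) * w r i / mass h r (w r).

Lemma wsum_fluct h (w : nat -> nat -> R) r x : mass h r (w r) <> 0 ->
  wsum h r (w r) x = mass h r (w r) / 2 * (1 + fluct (coef h w) x r).
Proof.
  intros HW. unfold fluct, coef.
  rewrite (lsum_ext _ (fun i => 2 / mass h r (w r) * (h (INR i / INR r) * w r i * x i)
                                + (- 1 / mass h r (w r)) * (h (INR i / INR r) * w r i * 1)))
    by (intros; field; auto).
  rewrite lsum_plus, !lsum_scal. fold (wsum h r (w r) x). fold (wsum h r (w r) (fun _ => 1)).
  fold (mass h r (w r)). field. auto.
Qed.

Section Limits.
Variable h : R -> R.
Hypothesis h_smooth : smooth h.
Hypothesis h_range : forall t, 0 <= t <= 1 -> 0 <= h t <= 1.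
Hypothesis h_nz_left : exists t, 0 <= t <= 1/2 /\ h t <> 0.
Hypothesis h_nz_right : exists t, 1/2 <= t <= 1 /\ h t <> 0.
Variable p : nat -> nat.
Variable a : R.
Hypothesis Hp : forall r, (2 <= r)%nat -> (p r <= r - 2)%nat.
Hypothesis Ha : Un_cv (fun r => (2 * INR (p r) - INR r) / sqrt (INR r)) a.

Definition dev (r : nat) : R := (Rabs (2 * INR (p r) - INR r) + 1) / INR r.

Lemma dev_cv : Un_cv dev 0.
Proof.
  apply Un_cv_eventually_ext
    with (u := fun r => Rabs ((2 * INR (p r) - INR r) / sqrt (INR r)) * / sqrt (INR r) + / INR r).
  - exists 1%nat. intros r Hr. unfold dev.
    assert (0 < INR r) by (apply lt_0_INR; lia).
    assert (Hq : 0 < sqrt (INR r)) by (apply sqrt_lt_R0; auto).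
    assert (Hss : sqrt (INR r) * sqrt (INR r) = INR r) by (apply sqrt_sqrt; lra).
    unfold Rdiv. rewrite Rabs_mult, Rabs_inv, (Rabs_pos_eq (sqrt (INR r))) by lra.
    set (q := sqrt (INR r)) in *. rewrite <- Hss. field. lra.
  - replace 0 with (Rabs a * 0 + 0) by ring.
    apply CV_plus; [apply CV_mult; [apply cv_cvabs, Ha | apply Un_cv_inv_sqrt] | apply Un_cv_inv_nat].
Qed.

Lemma dev_ge0 r : (1 <= r)%nat -> 0 <= dev r.
Proof.
  intros. unfold dev. apply Rmult_le_pos; [pose proof (Rabs_pos (2 * INR (p r) - INR r)); lra |].
  left; apply Rinv_0_lt_compat, lt_0_INR; lia.
Qed.

Lemma p_central : central p.
Proof.
  intros eps He. destruct (dev_cv eps He) as [N HN]. exists (S N). intros r Hr.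
  specialize (HN r ltac:(lia)). unfold R_dist in HN. rewrite Rminus_0_r in HN.
  assert (0 < INR r) by (apply lt_0_INR; lia).
  assert (Hd : Rabs (2 * INR (p r) - INR r) + 1 = dev r * INR r) by (unfold dev; field; lra).
  pose proof (Rle_abs (dev r)).
  assert (dev r * INR r <= eps * INR r) by (apply Rmult_le_compat_r; lra). lra.
Qed.

Lemma p_mid_close r : (1 <= r)%nat -> Rabs (INR (p r) - INR (mid r)) <= dev r * INR r.
Proof.
  intros Hr. assert (0 < INR r) by (apply lt_0_INR; lia).
  replace (dev r * INR r) with (Rabs (2 * INR (p r) - INR r) + 1) by (unfold dev; field; lra).
  pose proof (mid_bounds_R r).
  pose proof (Rle_abs (2 * INR (p r) - INR r)). pose proof (Rle_abs (- (2 * INR (p r) - INR r))).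
  rewrite Rabs_Ropp in H2. apply Rabs_le. lra.
Qed.

Lemma factor1_ratio_cv : Un_cv (fun r => INR (r - 1 - mid r) / INR (r - 1 - p r)) 1.
Proof.
  apply Un_cv_ratio1 with (e := fun r => 4 * dev r).
  - destruct (p_central (1/4) ltac:(lra)) as [N HN]. exists (N + 8)%nat. intros r Hr.
    specialize (HN r ltac:(lia)). pose proof (Hp r ltac:(lia)).
    assert (HR8 : INR 8 <= INR r) by (apply le_INR; lia). simpl in HR8.
    pose proof (Rle_abs (2 * INR (p r) - INR r)). pose proof (mid_bounds r).
    assert (Hv : INR (r - 1 - p r) = INR r - 1 - INR (p r)) by (rewrite !minus_INR by lia; simpl; ring).
    assert (Hu : INR (r - 1 - mid r) = INR r - 1 - INR (mid r)) by (rewrite !minus_INR by lia; simpl; ring).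
    assert (Hv4 : INR r / 4 <= INR (r - 1 - p r)) by lra.
    split; [lra |]. rewrite Hu, Hv.
    replace (INR r - 1 - INR (mid r) - (INR r - 1 - INR (p r))) with (INR (p r) - INR (mid r)) by ring.
    eapply Rle_trans; [apply p_mid_close; lia |]. rewrite <- Hv. pose proof (dev_ge0 r ltac:(lia)). nra.
  - replace 0 with (4 * 0) by ring. apply Un_cv_scal, dev_cv.
Qed.

Lemma factor2_ratio_cv : Un_cv (fun r => INR (S (mid r)) / INR (S (p r))) 1.
Proof.
  apply Un_cv_ratio1 with (e := fun r => 4 * dev r).
  - destruct (p_central (1/2) ltac:(lra)) as [N HN]. exists (N + 1)%nat. intros r Hr.
    specialize (HN r ltac:(lia)).
    pose proof (Rle_abs (- (2 * INR (p r) - INR r))). rewrite Rabs_Ropp in H.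
    assert (0 < INR r) by (apply lt_0_INR; lia).
    assert (Hv4 : INR r / 4 <= INR (S (p r))) by (rewrite S_INR; lra).
    split; [rewrite S_INR; pose proof (pos_INR (p r)); lra |]. rewrite !S_INR.
    replace (INR (mid r) + 1 - (INR (p r) + 1)) with (- (INR (p r) - INR (mid r))) by ring.
    rewrite Rabs_Ropp. eapply Rle_trans; [apply p_mid_close; lia |].
    rewrite <- S_INR. pose proof (dev_ge0 r ltac:(lia)). nra.
  - replace 0 with (4 * 0) by ring. apply Un_cv_scal, dev_cv.
Qed.

(* The total weight moves by [O(r |p - mid|) = o(r^2)], negligible against
   its size [r^2]. *)
Lemma mass_ratio_cv (wt : nat -> nat -> R) :
  (forall q q' i, Rabs (wt q i - wt q' i) <= Rabs (INR q - INR q')) ->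
  (exists del N, 0 < del /\ forall r, (N <= r)%nat -> del * INR r ^ 2 <= mass h r (wt (mid r))) ->
  Un_cv (fun r => mass h r (wt (p r)) / mass h r (wt (mid r))) 1.
Proof.
  intros Hlip [del [N [Hdel HN]]].
  apply Un_cv_ratio1 with (e := fun r => / del * dev r).
  - exists (N + 1)%nat. intros r Hr. specialize (HN r ltac:(lia)).
    assert (0 < INR r) by (apply lt_0_INR; lia).
    assert (0 < del * INR r ^ 2) by (apply Rmult_lt_0_compat; auto; apply pow_lt; auto).
    split; [lra |].
    eapply Rle_trans; [apply (mass_lipschitz h h_range r _ _ (Rabs (INR (p r) - INR (mid r)))); auto |].
    pose proof (p_mid_close r ltac:(lia)). pose proof (dev_ge0 r ltac:(lia)).
    apply Rle_trans with (/ del * dev r * (del * INR r ^ 2)).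
    + replace (/ del * dev r * (del * INR r ^ 2)) with (INR r * (dev r * INR r)) by (simpl; field; lra).
      apply Rmult_le_compat_l; lra.
    + apply Rmult_le_compat_l; auto. apply Rmult_le_pos; auto. left; apply Rinv_0_lt_compat; auto.
  - replace 0 with (/ del * 0) by ring. apply Un_cv_scal, dev_cv.
Qed.

(* Quadratic growth of the mass makes the normalised coefficients [O(1/r)]. *)
Lemma coef_bound (w : nat -> nat -> R) :
  (forall r i, (2 <= r)%nat -> (1 <= i <= r)%nat -> 0 <= w r i <= INR r) ->
  (exists del N, 0 < del /\ forall r, (N <= r)%nat -> del * INR r ^ 2 <= mass h r (w r)) ->
  exists c R0, 0 < c /\ forall s i, (R0 <= s)%nat -> (1 <= i <= s)%nat -> Rabs (coef h w s i) <= c / INR s.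
Proof.
  intros Hw [del [N [Hdel HN]]]. exists (2 / del), (N + 2)%nat.
  split; [apply Rdiv_lt_0_compat; lra |]. intros r i Hr Hi.
  assert (Hr0 : 0 < INR r) by (apply lt_0_INR; lia).
  destruct (h_at h h_range r i Hi) as [Hh0 Hh1]. destruct (Hw r i ltac:(lia) Hi) as [Hw0 Hw1].
  specialize (HN r ltac:(lia)).
  assert (HWp : 0 < del * INR r ^ 2) by (apply Rmult_lt_0_compat; auto; apply pow_lt; auto).
  unfold coef. rewrite Rabs_pos_eq by (apply Rmult_le_pos; [nra | left; apply Rinv_0_lt_compat; lra]).
  apply Rle_trans with (2 * 1 * INR r / (del * INR r ^ 2)).
  - unfold Rdiv. apply Rmult_le_compat; [nra | left; apply Rinv_0_lt_compat; lra | |].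
    + apply Rmult_le_compat; nra.
    + apply Rinv_le_contravar; auto.
  - right. simpl. field. lra.
Qed.

Lemma fluct_null (w : nat -> nat -> R) :
  (forall r i, (2 <= r)%nat -> (1 <= i <= r)%nat -> 0 <= w r i <= INR r) ->
  (exists del N, 0 < del /\ forall r, (N <= r)%nat -> del * INR r ^ 2 <= mass h r (w r)) ->
  Omega_null (fun x => ~ Un_cv (fluct (coef h w) x) 0).
Proof.
  intros Hw Hmass. destruct (coef_bound w Hw Hmass) as [c [R0 [Hc HA]]].
  exact (fluctuation_null (coef h w) c R0 Hc HA).
Qed.

(* A row of the normalised Betti table factors as binomial ratio x prefactor
   ratio x mass ratio x (1 + fluctuation); each factor has a limit. *)
Lemma row_limit (q : nat) (d dm : nat -> R) (wt : nat -> nat -> R) x :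
  (exists N, forall r, (N <= r)%nat -> 0 < d r /\
     betti_entry h r x (p r) q = binomR (r - 2) (p r) / d r * wsum h r (wt (p r)) x) ->
  Un_cv (fun r => dm r / d r) 1 ->
  (exists del N, 0 < del /\ forall r, (N <= r)%nat -> del * INR r ^ 2 <= mass h r (wt (p r))) ->
  (exists del N, 0 < del /\ forall r, (N <= r)%nat -> del * INR r ^ 2 <= mass h r (wt (mid r))) ->
  Un_cv (fun r => mass h r (wt (p r)) / mass h r (wt (mid r))) 1 ->
  Un_cv (fluct (coef h (fun r => wt (p r))) x) 0 ->
  Un_cv (fun r => 2 * dm r / (binomR (r - 2) (mid r) * mass h r (wt (mid r))) * betti_entry h r x (p r) q)
        (exp (- a ^ 2 / 2)).
Proof.
  intros [N0 HN0] Hd [d1 [N1 [Hd1 HN1]]] [d2 [N2 [Hd2 HN2]]] Hmass Hfl.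
  replace (exp (- a ^ 2 / 2)) with (exp (- a ^ 2 / 2) * 1 * 1 * (1 + 0)) by ring.
  apply Un_cv_eventually_ext with (u := fun r => binomR (r - 2) (p r) / binomR (r - 2) (mid r)
      * (dm r / d r) * (mass h r (wt (p r)) / mass h r (wt (mid r))) * (1 + fluct (coef h (fun r => wt (p r))) x r)).
  - exists (N0 + N1 + N2 + 1)%nat. intros r Hr.
    destruct (HN0 r ltac:(lia)) as [Hdr ->]. specialize (HN1 r ltac:(lia)). specialize (HN2 r ltac:(lia)).
    assert (0 < INR r) by (apply lt_0_INR; lia). assert (0 < INR r ^ 2) by (apply pow_lt; auto).
    assert (0 < d1 * INR r ^ 2) by (apply Rmult_lt_0_compat; auto).
    assert (0 < d2 * INR r ^ 2) by (apply Rmult_lt_0_compat; auto).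
    pose proof (binomR_pos (r - 2) (p r)). pose proof (binomR_pos (r - 2) (mid r)).
    rewrite (wsum_fluct h (fun r => wt (p r))) by lra.
    field. repeat split; lra.
  - apply CV_mult; [apply CV_mult; [apply CV_mult |] |]; auto.
    + apply binomR_ratio_limit; auto.
    + apply CV_plus; [apply Un_cv_const | auto].
Qed.

Lemma normalized_rows_ae : ae_Omega (fun x =>
    Un_cv (fun r => normalizer1 h r * betti_entry h r x (p r) 1) (exp (- a ^ 2 / 2)) /\
    Un_cv (fun r => normalizer2 h r * betti_entry h r x (p r) 2) (exp (- a ^ 2 / 2))).
Proof.
  pose proof (mass1_lower h h_smooth h_range p h_nz_right p_central) as L1p.
  pose proof (mass1_lower h h_smooth h_range mid h_nz_right mid_central) as L1m.
  pose proof (mass2_lower h h_smooth h_range p h_nz_left p_central) as L2p.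
  pose proof (mass2_lower h h_smooth h_range mid h_nz_left mid_central) as L2m.
  assert (Hw1 : forall r i, (2 <= r)%nat -> (1 <= i <= r)%nat -> 0 <= weight1 (p r) i <= INR r)
    by (intros; unfold weight1; split; [apply pos_INR | apply le_INR; lia]).
  assert (Hw2 : forall r i, (2 <= r)%nat -> (1 <= i <= r)%nat -> 0 <= weight2 (p r) i <= INR r)
    by (intros r i Hr Hi; pose proof (Hp r Hr); unfold weight2; split; [apply pos_INR | apply le_INR; lia]).
  unfold ae_Omega.
  apply Omega_null_mono with (1 := Omega_null_union _ _ (fluct_null _ Hw1 L1p) (fluct_null _ Hw2 L2p)).
  intros x _ Hbad. apply NNPP. intros Hgood. apply Hbad. apply not_or_and in Hgood as [G1 G2].
  apply NNPP in G1, G2. split.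
  - apply (row_limit 1 (fun r => INR (r - 1 - p r)) (fun r => INR (r - 1 - mid r)) weight1 x);
      auto using factor1_ratio_cv, mass_ratio_cv, weight1_lip.
    exists 2%nat. intros r Hr. pose proof (Hp r Hr).
    split; [apply lt_0_INR; lia | apply betti_entry_row1; lia].
  - apply (row_limit 2 (fun r => INR (S (p r))) (fun r => INR (S (mid r))) weight2 x);
      auto using factor2_ratio_cv, mass_ratio_cv, weight2_lip.
    exists 2%nat. intros r Hr. pose proof (Hp r Hr).
    split; [apply lt_0_INR; lia | apply betti_entry_row2; lia].
Qed.
End Limits.

Theorem mainTheorem8 (h : R -> R)
  (h_smooth : smooth h)
  (h_range : forall t, 0 <= t <= 1 -> 0 <= h t <= 1)
  (h_nz_left : exists t, 0 <= t <= 1/2 /\ h t <> 0)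
  (h_nz_right : exists t, 1/2 <= t <= 1 /\ h t <> 0) :
  exists F1 F2 : nat -> R,
    forall (p : nat -> nat) (a : R),
      (forall r, (2 <= r)%nat -> (p r <= r - 2)%nat) ->
      Un_cv (fun r => (2 * INR (p r) - INR r) / sqrt (INR r)) a ->
      ae_Omega (fun x =>
        Un_cv (fun r => F1 r * betti_entry h r x (p r) 1) (exp (- a ^ 2 / 2)) /\
        Un_cv (fun r => F2 r * betti_entry h r x (p r) 2) (exp (- a ^ 2 / 2))).
Proof.
  exists (normalizer1 h), (normalizer2 h). intros p a Hp Ha.
  apply normalized_rows_ae; auto.
Qed.
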